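(* Let $X$ be a Peano continuum with metric $d$, let $x\in X$, and let $(f_n)_{n\in\mathbb{N}}$ (with $\mathbb{N}=\{0,1,2,\dots\}$) be continuous loops $f_n\colon[0,1]\to X$ with $f_n(0)=f_n(1)=x$, such that $\operatorname{diam} f_n([0,1])\le 2^{-n}$ and no $f_n$ is nulhomologous (i.e. each $f_n$ represents a nonzero element of $H_1(X)$). Let $f_n^1=f_n$ and let $f_n^0$ be the constant loop at $x$. For $\alpha\in\{0,1\}^{\mathbb{N}}$ define the infinite concatenation $f^\alpha=f_0^{\alpha(0)}\ast f_1^{\alpha(1)}\ast f_2^{\alpha(2)}\ast\cdots\colon[0,1]\to X$ by $f^\alpha(t)=f_n^{\alpha(n)}\big(2^{n+1}(t-(1-2^{-n}))\big)$ for $t\in[1-2^{-n},1-2^{-n-1}]$ and $f^\alpha(1)=x$ (this is a continuous loop at $x$). Define a relation $\sim$ on the Cantor set $\{0,1\}^{\mathbb{N}}$ by $\alpha\sim\beta$ iff $f^\alpha$ and $f^\beta$ are homologous (represent the same element of $H_1(X)$). Then $\sim$ is an analytic equivalence relation on $\{0,1\}^{\mathbb{N}}$ (i.e. an analytic subset of $\{0,1\}^{\mathbb{N}}\times\{0,1\}^{\mathbb{N}}$ which is an equivalence relation), and if $\alpha,\beta\in\{0,1\}^{\mathbb{N}}$ differ at exactly one coordinate then $\alpha\not\sim\beta$.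
   Context: A Peano continuum is a connected, locally connected compact metric space. The Cantor set $\{0,1\}^{\mathbb{N}}$ carries the product topology with $\{0,1\}$ discrete. A space is Polish if it is separable and completely metrizable. If $Y$ is Polish, a set $A\subseteq Y$ is analytic if there is a Polish space $Z$ and a closed set $D\subseteq Y\times Z$ such that $A$ is the projection of $D$ to $Y$. *)

From Stdlib Require Import Reals ZArith List.
Open Scope R_scope.

Definition is_metric {X : Type} (d : X -> X -> R) : Prop :=
  (forall x y, 0 <= d x y) /\
  (forall x y, d x y = 0 <-> x = y) /\
  (forall x y, d x y = d y x) /\
  (forall x y z, d x z <= d x y + d y z).

Definition is_open {X : Type} (d : X -> X -> R) (U : X -> Prop) : Prop :=
  forall y, U y -> exists eps, eps > 0 /\ forall z, d y z < eps -> U z.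

Definition compact_space {X : Type} (d : X -> X -> R) : Prop :=
  forall (I : Type) (U : I -> X -> Prop),
    (forall i, is_open d (U i)) -> (forall y, exists i, U i y) ->
    exists l : list I, forall y, exists i, In i l /\ U i y.

(* a subset V is connected in the subspace topology *)
Definition connected_subset {X : Type} (d : X -> X -> R) (V : X -> Prop) : Prop :=
  forall A B : X -> Prop, is_open d A -> is_open d B ->
    (forall y, V y -> A y \/ B y) ->
    (forall y, ~ (V y /\ A y /\ B y)) ->
    (forall y, V y -> A y) \/ (forall y, V y -> B y).

Definition connected_space {X : Type} (d : X -> X -> R) : Prop :=
  connected_subset d (fun _ => True).

Definition locally_connected {X : Type} (d : X -> X -> R) : Prop :=
  forall y U, is_open d U -> U y ->
    exists V, is_open d V /\ V y /\ (forall z, V z -> U z) /\ connected_subset d V.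

(* Peano continuum: connected, locally connected compact metric space
   (nonempty, as a continuum) *)
Definition peano_continuum {X : Type} (d : X -> X -> R) : Prop :=
  is_metric d /\ compact_space d /\ connected_space d /\ locally_connected d
  /\ inhabited X.

(* ---------- paths and loops (maps [0,1] -> X, values outside [0,1] ignored) ---------- *)
Definition unit_int (t : R) : Prop := 0 <= t <= 1.

Definition cont_on_I {X : Type} (d : X -> X -> R) (p : R -> X) : Prop :=
  forall t, unit_int t -> forall eps, eps > 0 ->
    exists delta, delta > 0 /\
      forall s, unit_int s -> Rabs (s - t) < delta -> d (p s) (p t) < eps.

Definition is_loop {X : Type} (d : X -> X -> R) (p : R -> X) (x : X) : Prop :=
  cont_on_I d p /\ p 0 = x /\ p 1 = x.

(* standard 2-simplex {(s,t) | s,t >= 0, s + t <= 1}, vertices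
   e0 = (0,0), e1 = (1,0), e2 = (0,1) *)
Definition simplex2_pt (s t : R) : Prop := 0 <= s /\ 0 <= t /\ s + t <= 1.

Definition cont_on_simplex2 {X : Type} (d : X -> X -> R) (sg : R -> R -> X) : Prop :=
  forall s t, simplex2_pt s t -> forall eps, eps > 0 ->
    exists delta, delta > 0 /\
      forall s' t', simplex2_pt s' t' -> Rabs (s' - s) + Rabs (t' - t) < delta ->
        d (sg s' t') (sg s t) < eps.

(* faces d_i (omit vertex e_i), parametrized affinely by [0,1] *)
Definition face0 {X : Type} (sg : R -> R -> X) : R -> X := fun u => sg (1 - u) u.
Definition face1 {X : Type} (sg : R -> R -> X) : R -> X := fun u => sg 0 u.
Definition face2 {X : Type} (sg : R -> R -> X) : R -> X := fun u => sg u 0.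

(* singular 1-chains / 2-chains as finite formal Z-combinations *)
Definition chain1 (X : Type) := list (Z * (R -> X)).
Definition chain2 (X : Type) := list (Z * (R -> R -> X)).

Definition bd2 {X : Type} (C : chain2 X) : chain1 X :=
  flat_map (fun e => (fst e, face0 (snd e)) :: ((- fst e)%Z, face1 (snd e))
                      :: (fst e, face2 (snd e)) :: nil) C.

Definition neg_chain1 {X : Type} (c : chain1 X) : chain1 X :=
  map (fun e => ((- fst e)%Z, snd e)) c.

(* two 1-simplices are the same singular simplex iff equal on [0,1] *)
Definition same_simplex1 {X : Type} (p q : R -> X) : Prop :=
  forall t, unit_int t -> p t = q t.

Inductive coef {X : Type} : chain1 X -> (R -> X) -> Z -> Prop :=
| coef_nil : forall p, coef nil p 0%Z
| coef_same : forall k q c p m, same_simplex1 q p -> coef c p m ->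
    coef ((k, q) :: c) p (k + m)%Z
| coef_other : forall k q c p m, ~ same_simplex1 q p -> coef c p m ->
    coef ((k, q) :: c) p m.

Definition null_chain1 {X : Type} (c : chain1 X) : Prop :=
  forall p, coef c p 0%Z.

Definition singular_chain2 {X : Type} (d : X -> X -> R) (C : chain2 X) : Prop :=
  forall e, In e C -> cont_on_simplex2 d (snd e).

Definition homologous {X : Type} (d : X -> X -> R) (f g : R -> X) : Prop :=
  exists C : chain2 X, singular_chain2 d C /\
    null_chain1 ((1%Z, f) :: ((-1)%Z, g) :: neg_chain1 (bd2 C)).

Definition nulhomologous {X : Type} (d : X -> X -> R) (f : R -> X) : Prop :=
  exists C : chain2 X, singular_chain2 d C /\
    null_chain1 ((1%Z, f) :: neg_chain1 (bd2 C)).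

Definition cantor := nat -> bool.

Definition fpow {X : Type} (f : nat -> R -> X) (x : X) (n : nat) (b : bool) : R -> X :=
  if b then f n else (fun _ => x).

(* for 0 <= t < 1, blk t is the n with 1 - 2^-n <= t < 1 - 2^-(n+1),
   i.e. floor(log_2 (1/(1-t))) *)
Definition blk (t : R) : nat := Z.to_nat (Int_part (- ln (1 - t) / ln 2)).

Definition concat {X : Type} (f : nat -> R -> X) (x : X) (a : cantor) (t : R) : X :=
  if Rlt_dec t 1 then
    let n := blk t in fpow f x n (a n) (2 ^ (n + 1) * (t - (1 - (/ 2) ^ n)))
  else x.

Definition sim_rel {X : Type} (d : X -> X -> R) (f : nat -> R -> X) (x : X)
  (a b : cantor) : Prop :=
  homologous d (concat f x a) (concat f x b).

Definition complete_metric {Z : Type} (dZ : Z -> Z -> R) : Prop :=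
  forall u : nat -> Z,
    (forall eps, eps > 0 -> exists N, forall m n, (m >= N)%nat -> (n >= N)%nat ->
        dZ (u m) (u n) < eps) ->
    exists z, forall eps, eps > 0 -> exists N, forall n, (n >= N)%nat -> dZ (u n) z < eps.

(* a countable dense subset, enumerated by s (None entries allowed so that
   the empty space is separable) *)
Definition separable_metric {Z : Type} (dZ : Z -> Z -> R) : Prop :=
  exists s : nat -> option Z,
    forall z eps, eps > 0 -> exists n w, s n = Some w /\ dZ z w < eps.

Definition polish_metric {Z : Type} (dZ : Z -> Z -> R) : Prop :=
  is_metric dZ /\ complete_metric dZ /\ separable_metric dZ.

(* closedness of D in (cantor x cantor) x Z with the product topology
   (cantor = {0,1}^N with product of discrete topologies):
   the complement is open, i.e. contains a basic open neighbourhood of each point *)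
Definition closed_in_CCZ {Z : Type} (dZ : Z -> Z -> R)
  (D : cantor -> cantor -> Z -> Prop) : Prop :=
  forall a b z, ~ D a b z ->
    exists (N : nat) (eps : R), eps > 0 /\
      forall a' b' z', (forall i, (i < N)%nat -> a' i = a i /\ b' i = b i) ->
        dZ z z' < eps -> ~ D a' b' z'.

Definition analytic_CC (A : cantor -> cantor -> Prop) : Prop :=
  exists (Z : Type) (dZ : Z -> Z -> R) (D : cantor -> cantor -> Z -> Prop),
    polish_metric dZ /\ closed_in_CCZ dZ D /\
    forall a b, A a b <-> exists z, D a b z.

Definition equivalence_rel {T : Type} (E : T -> T -> Prop) : Prop :=
  (forall a, E a a) /\ (forall a b, E a b -> E b a) /\
  (forall a b c, E a b -> E b c -> E a c).

Definition differ_exactly_once (a b : cantor) : Prop :=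
  exists k, a k <> b k /\ forall j, j <> k -> a j = b j.

(* Reflexivity, symmetry and transitivity of [~] come
   from the empty chain, negated chains and concatenated chains.  If [a] and [b] differ only at [k],
   cutting [f^a] and [f^b] at the ends of the [k]-th block by two affine 2-simplices each shows that
   [f^a - f^b] is homologous to [f_k] minus a constant loop, so [a ~ b] would make [f_k]
   nulhomologous.
   For analyticity, a 2-chain is coded by a point of the Polish space [(nat * X)^nat]: the number of
   simplices, their coefficients, a common modulus of uniform continuity, and their values at the
   dyadic points of the standard simplex, from which each simplex is recovered as the continuous
   extension.  The coded simplices depend continuously on the code and a pointwise limit of null
   1-chains with fixed coefficients is null, so the triples (a, b, code) for which [f^a - f^b] is
   the boundary of the coded chain form a closed set, whose projection is [~]. *)

From Pilot Require Import Defs.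
From Coquelicot Require Import Coquelicot.
From Stdlib Require Import Reals ZArith List Lia Lra Classical ClassicalEpsilon Cantor
  FunctionalExtensionality Rtopology.
Open Scope R_scope.
Notation concat := Defs.concat.

Definition indicator (P : Prop) : Z :=
  if excluded_middle_informative P then 1%Z else 0%Z.

Lemma indicator_true (P : Prop) : P -> indicator P = 1%Z.
Proof. intro H. unfold indicator. destruct (excluded_middle_informative P); tauto. Qed.

Lemma indicator_false (P : Prop) : ~ P -> indicator P = 0%Z.
Proof. intro H. unfold indicator. destruct (excluded_middle_informative P); tauto. Qed.

Lemma indicator_iff (P Q : Prop) : (P <-> Q) -> indicator P = indicator Q.
Proof.
  intro H. unfold indicator.
  destruct (excluded_middle_informative P), (excluded_middle_informative Q); tauto.
Qed.

Lemma indicator_bounds (P : Prop) : (0 <= indicator P <= 1)%Z.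
Proof. unfold indicator. destruct (excluded_middle_informative P); lia. Qed.

Lemma metric_dist_refl {X : Type} (d : X -> X -> R) : is_metric d -> forall y, d y y = 0.
Proof. intros Hm y. apply Hm. reflexivity. Qed.

Lemma metric_triangle_via {X : Type} (d : X -> X -> R) : is_metric d ->
  forall a b c, d a c <= d b a + d b c.
Proof. intros [_ [_ [Ms Mt]]] a b c. rewrite (Ms b a). apply Mt. Qed.

(** * Coefficients of singular 1-chains *)

Fixpoint coeff {X : Type} (c : chain1 X) (p : R -> X) : Z :=
  match c with
  | nil => 0%Z
  | (k, q) :: c' => (k * indicator (same_simplex1 q p) + coeff c' p)%Z
  end.

Lemma coef_coeff {X : Type} (c : chain1 X) p : coef c p (coeff c p).
Proof.
  induction c as [|[k q] c IH]; simpl; [constructor|].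
  destruct (classic (same_simplex1 q p)) as [H|H].
  - rewrite indicator_true by exact H.
    replace (k * 1 + coeff c p)%Z with (k + coeff c p)%Z by ring. now constructor.
  - rewrite indicator_false by exact H.
    replace (k * 0 + coeff c p)%Z with (coeff c p) by ring. now constructor.
Qed.

Lemma coef_coeff_eq {X : Type} (c : chain1 X) p m : coef c p m -> m = coeff c p.
Proof.
  induction 1; simpl.
  - reflexivity.
  - rewrite indicator_true by assumption. lia.
  - rewrite indicator_false by assumption. lia.
Qed.

Lemma null_chain1_coeff {X : Type} (c : chain1 X) :
  null_chain1 c <-> forall p, coeff c p = 0%Z.
Proof.
  split; intros H p.
  - symmetry; apply coef_coeff_eq, H.
  - rewrite <- (H p). apply coef_coeff.
Qed.

Lemma coeff_app {X : Type} (c1 c2 : chain1 X) p :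
  coeff (c1 ++ c2) p = (coeff c1 p + coeff c2 p)%Z.
Proof. induction c1 as [|[k q] c IH]; simpl; lia. Qed.

Lemma coeff_neg_chain1 {X : Type} (c : chain1 X) p :
  coeff (neg_chain1 c) p = (- coeff c p)%Z.
Proof. induction c as [|[k q] c IH]; simpl; lia. Qed.

Lemma bd2_app {X : Type} (C1 C2 : chain2 X) : bd2 (C1 ++ C2) = bd2 C1 ++ bd2 C2.
Proof. apply flat_map_app. Qed.

Lemma bd2_cons {X : Type} k (s : R -> R -> X) C :
  bd2 ((k, s) :: C) = (k, face0 s) :: ((-k)%Z, face1 s) :: (k, face2 s) :: bd2 C.
Proof. reflexivity. Qed.

Lemma singular_chain2_app {X : Type} (d : X -> X -> R) C1 C2 :
  singular_chain2 d C1 -> singular_chain2 d C2 -> singular_chain2 d (C1 ++ C2).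
Proof. intros H1 H2 e He. apply in_app_or in He. destruct He; auto. Qed.

Lemma same_simplex1_refl {X : Type} (p : R -> X) : same_simplex1 p p.
Proof. intros t _; reflexivity. Qed.

Lemma same_simplex1_sym {X : Type} (p q : R -> X) : same_simplex1 p q -> same_simplex1 q p.
Proof. intros H t Ht; symmetry; auto. Qed.

Lemma same_simplex1_trans {X : Type} (p q r : R -> X) :
  same_simplex1 p q -> same_simplex1 q r -> same_simplex1 p r.
Proof. intros H1 H2 t Ht; rewrite H1; auto. Qed.

Lemma indicator_same_simplex1_l {X : Type} (q q' p : R -> X) : same_simplex1 q q' ->
  indicator (same_simplex1 q p) = indicator (same_simplex1 q' p).
Proof.
  intro H. apply indicator_iff. split; apply same_simplex1_trans;
    [apply same_simplex1_sym|]; exact H.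
Qed.

Lemma homologous_coeff {X : Type} (d : X -> X -> R) f g :
  homologous d f g <-> exists C, singular_chain2 d C /\ forall p,
    (indicator (same_simplex1 f p) - indicator (same_simplex1 g p) = coeff (bd2 C) p)%Z.
Proof.
  unfold homologous. setoid_rewrite null_chain1_coeff. cbn [coeff].
  setoid_rewrite coeff_neg_chain1.
  split; intros [C [HC H]]; exists C; split; auto; intro p; specialize (H p); lia.
Qed.

Lemma nulhomologous_coeff {X : Type} (d : X -> X -> R) f :
  nulhomologous d f <-> exists C, singular_chain2 d C /\ forall p,
    indicator (same_simplex1 f p) = coeff (bd2 C) p.
Proof.
  unfold nulhomologous. setoid_rewrite null_chain1_coeff. cbn [coeff].
  setoid_rewrite coeff_neg_chain1.
  split; intros [C [HC H]]; exists C; split; auto; intro p; specialize (H p); lia.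
Qed.

Definition neg_chain2 {X : Type} (C : chain2 X) : chain2 X :=
  map (fun e => ((- fst e)%Z, snd e)) C.

Lemma coeff_bd2_neg_chain2 {X : Type} (C : chain2 X) p :
  coeff (bd2 (neg_chain2 C)) p = (- coeff (bd2 C) p)%Z.
Proof. induction C as [|[k s] C IH]; simpl; lia. Qed.

Lemma singular_chain2_neg {X : Type} (d : X -> X -> R) C :
  singular_chain2 d C -> singular_chain2 d (neg_chain2 C).
Proof.
  intros H e He. apply in_map_iff in He.
  destruct He as [e' [<- He']]. exact (H e' He').
Qed.

Lemma sim_rel_equivalence {X : Type} (d : X -> X -> R) f x :
  equivalence_rel (sim_rel d f x).
Proof.
  unfold sim_rel; split; [|split].
  - intro a. apply homologous_coeff. exists nil. split.
    + intros e [].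
    + intro p; simpl; lia.
  - intros a b H. apply homologous_coeff in H. destruct H as [C [HC H]].
    apply homologous_coeff. exists (neg_chain2 C). split.
    + now apply singular_chain2_neg.
    + intro p. rewrite coeff_bd2_neg_chain2. specialize (H p). lia.
  - intros a b c H1 H2. apply homologous_coeff in H1, H2.
    destruct H1 as [C1 [HC1 H1]], H2 as [C2 [HC2 H2]].
    apply homologous_coeff. exists (C1 ++ C2). split.
    + now apply singular_chain2_app.
    + intro p. rewrite bd2_app, coeff_app. specialize (H1 p); specialize (H2 p). lia.
Qed.

(** * Affine simplices in a path *)

Definition seg {X : Type} (g : R -> X) (a b : R) : R -> X := fun u => g (a + (b - a) * u).

Definition tri {X : Type} (g : R -> X) (v0 v1 v2 : R) : R -> R -> X :=
  fun s t => g (v0 + (v1 - v0) * s + (v2 - v0) * t).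

Lemma tri_cont {X : Type} (d : X -> X -> R) g v0 v1 v2 :
  cont_on_I d g -> unit_int v0 -> unit_int v1 -> unit_int v2 ->
  cont_on_simplex2 d (tri g v0 v1 v2).
Proof.
  intros Hg H0 H1 H2 s t [Hs [Ht Hst]] eps Heps. unfold unit_int in *.
  assert (Hconv : forall s t, simplex2_pt s t -> unit_int (v0 + (v1 - v0) * s + (v2 - v0) * t)).
  { intros s' t' [? [? ?]]. unfold unit_int.
    replace (v0 + (v1 - v0) * s' + (v2 - v0) * t')
      with (v0 * (1 - s' - t') + v1 * s' + v2 * t') by ring. split; nra. }
  destruct (Hg _ (Hconv s t (conj Hs (conj Ht Hst))) eps Heps) as [d0 [Hd0 Hc]].
  set (M := Rabs (v1 - v0) + Rabs (v2 - v0) + 1).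
  pose proof (Rabs_pos (v1 - v0)). pose proof (Rabs_pos (v2 - v0)).
  assert (HM : 0 < M) by (unfold M; lra).
  exists (d0 / M). split; [apply Rdiv_lt_0_compat; auto|].
  intros s' t' Hst' Hd. apply Hc; [apply Hconv; auto|].
  replace (v0 + (v1 - v0) * s' + (v2 - v0) * t' - (v0 + (v1 - v0) * s + (v2 - v0) * t))
    with ((v1 - v0) * (s' - s) + (v2 - v0) * (t' - t)) by ring.
  eapply Rle_lt_trans; [apply Rabs_triang|]. rewrite !Rabs_mult.
  assert (Hm : (Rabs (s' - s) + Rabs (t' - t)) * M < d0).
  { apply Rmult_lt_compat_r with (r := M) in Hd; auto.
    replace (d0 / M * M) with d0 in Hd by (field; lra). exact Hd. }
  pose proof (Rabs_pos (s' - s)). pose proof (Rabs_pos (t' - t)).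
  unfold M in Hm. nra.
Qed.

Lemma coeff_bd2_tri {X : Type} (g : R -> X) v0 v1 v2 k p :
  coeff (bd2 ((k, tri g v0 v1 v2) :: nil)) p =
  (k * indicator (same_simplex1 (seg g v1 v2) p) - k * indicator (same_simplex1 (seg g v0 v2) p)
   + k * indicator (same_simplex1 (seg g v0 v1) p))%Z.
Proof.
  rewrite bd2_cons. cbn [coeff bd2 flat_map].
  rewrite (indicator_same_simplex1_l (face0 _) (seg g v1 v2)),
    (indicator_same_simplex1_l (face1 _) (seg g v0 v2)),
    (indicator_same_simplex1_l (face2 _) (seg g v0 v1)).
  - lia.
  - intros u _. unfold face2, tri, seg. f_equal. ring.
  - intros u _. unfold face1, tri, seg. f_equal. ring.
  - intros u _. unfold face0, tri, seg. f_equal. ring.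
Qed.

Definition subdivision {X : Type} (g : R -> X) (c e : R) : chain2 X :=
  (1%Z, tri g 0 c 1) :: (1%Z, tri g c e 1) :: nil.

Lemma coeff_bd2_subdivision {X : Type} (g : R -> X) c e p :
  coeff (bd2 (subdivision g c e)) p =
  (indicator (same_simplex1 (seg g 0 c) p) + indicator (same_simplex1 (seg g c e) p)
   + indicator (same_simplex1 (seg g e 1) p) - indicator (same_simplex1 g p))%Z.
Proof.
  change (subdivision g c e) with (((1%Z, tri g 0 c 1) :: nil) ++ ((1%Z, tri g c e 1) :: nil)).
  rewrite bd2_app, coeff_app, !coeff_bd2_tri.
  rewrite (indicator_same_simplex1_l (seg g 0 1) g) by (intros u _; unfold seg; f_equal; ring).
  lia.
Qed.

Lemma singular_subdivision {X : Type} (d : X -> X -> R) g c e :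
  cont_on_I d g -> unit_int c -> unit_int e -> singular_chain2 d (subdivision g c e).
Proof.
  intros Hg Hc He el [<-|[<-|[]]]; apply tri_cont; auto; unfold unit_int; lra.
Qed.

(** * Dyadic blocks and the infinite concatenation *)

Lemma half_pow_pos n : 0 < (/2)^n.
Proof. apply pow_lt; lra. Qed.

Lemma half_pow_le1 n : (/2)^n <= 1.
Proof. induction n; simpl; [lra|]. pose proof (half_pow_pos n). lra. Qed.

Lemma half_pow_add1 n : (/2)^(n+1) = /2 * (/2)^n.
Proof. rewrite Nat.add_comm. reflexivity. Qed.

Lemma half_pow_le m n : (m <= n)%nat -> (/2)^n <= (/2)^m.
Proof.
  induction 1; [lra|]. simpl. pose proof (half_pow_pos m0). lra.
Qed.

Lemma half_pow_small eps : eps > 0 -> exists N, (/2)^N < eps.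
Proof.
  intro He. destruct (pow_lt_1_zero (/2)) with (y := eps) as [N HN]; auto.
  - rewrite Rabs_right; lra.
  - exists N. specialize (HN N (le_n N)). rewrite Rabs_right in HN; auto.
    left; apply half_pow_pos.
Qed.

Lemma pow2_pos n : 0 < 2 ^ n.
Proof. apply pow_lt; lra. Qed.

Lemma pow2_half_pow n : 2 ^ n * (/2) ^ n = 1.
Proof. rewrite <- Rpow_mult_distr. replace (2 * /2) with 1 by field. apply pow1. Qed.

Lemma ln_le_iff x y : 0 < x -> 0 < y -> (ln x <= ln y <-> x <= y).
Proof.
  intros Hx Hy. split; intro H.
  - destruct (Rle_or_lt x y) as [h|h]; auto. apply ln_increasing in h; lra.
  - destruct H as [h|h]; [left; apply ln_increasing|right; subst]; auto.
Qed.

Lemma ln_lt_iff x y : 0 < x -> 0 < y -> (ln x < ln y <-> x < y).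
Proof.
  intros Hx Hy. split; [apply ln_lt_inv; auto|apply ln_increasing; auto].
Qed.

Lemma ln_half_pow n : ln ((/2)^n) = - INR n * ln 2.
Proof. rewrite ln_pow, ln_Rinv by lra. ring. Qed.

(* [blk t = floor (- log2 (1 - t))], so the characterisation goes through logarithms. *)
Lemma block_iff_log n t : t < 1 ->
  (1 - (/2)^n <= t < 1 - (/2)^(n+1) <-> INR n <= - ln (1 - t) / ln 2 < INR n + 1).
Proof.
  intro Ht. assert (L2 : 0 < ln 2) by (pose proof ln_lt_2; lra).
  set (r := - ln (1 - t) / ln 2).
  assert (Er : r * ln 2 = - ln (1 - t)) by (unfold r; field; lra).
  assert (A1 : 1 - (/2)^n <= t <-> ln (1 - t) <= - INR n * ln 2).
  { rewrite <- ln_half_pow, ln_le_iff by (lra || apply half_pow_pos). lra. }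
  assert (A2 : t < 1 - (/2)^(n+1) <-> - (INR n + 1) * ln 2 < ln (1 - t)).
  { replace (INR n + 1) with (INR (n + 1)) by (rewrite plus_INR; reflexivity).
    rewrite <- ln_half_pow, ln_lt_iff by (lra || apply half_pow_pos). lra. }
  rewrite A1, A2. split; intros [B1 B2]; split; nra.
Qed.

Lemma blk_eq n t : 1 - (/2)^n <= t < 1 - (/2)^(n+1) -> blk t = n.
Proof.
  intro Hb. assert (Ht : t < 1) by (pose proof (half_pow_pos (n+1)); lra).
  apply block_iff_log in Hb; auto. unfold blk.
  rewrite <- (Int_part_spec _ (Z.of_nat n)); [apply Nat2Z.id|].
  rewrite <- INR_IZR_INZ. lra.
Qed.

Lemma blk_bounds t : 0 <= t < 1 -> 1 - (/2)^(blk t) <= t < 1 - (/2)^(blk t + 1).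
Proof.
  intros [H0 H1]. apply block_iff_log; auto.
  assert (L2 : 0 < ln 2) by (pose proof ln_lt_2; lra).
  set (r := - ln (1 - t) / ln 2).
  assert (Hr : 0 <= r).
  { unfold r. assert (ln (1 - t) <= 0) by (rewrite <- ln_1, ln_le_iff; lra).
    apply Rmult_le_pos; [lra|left; apply Rinv_0_lt_compat; auto]. }
  pose proof (base_Int_part r) as [B1 B2].
  assert (Hz : (0 <= Int_part r)%Z).
  { destruct (Z_le_gt_dec 0 (Int_part r)) as [h|h]; auto.
    exfalso. apply Z.gt_lt, Zlt_le_succ, IZR_le in h. rewrite succ_IZR in h. lra. }
  unfold blk. fold r. rewrite INR_IZR_INZ, Z2Nat.id by exact Hz. lra.
Qed.

Lemma blk_ge n s : 0 <= s < 1 -> 1 - (/2)^n <= s -> (n <= blk s)%nat.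
Proof.
  intros Hs Hn. pose proof (blk_bounds s Hs) as [_ B].
  destruct (le_lt_dec n (blk s)) as [h|h]; auto.
  pose proof (half_pow_le (blk s + 1) n ltac:(lia)). lra.
Qed.

Lemma blk_lt n s : 0 <= s -> s < 1 - (/2)^n -> (blk s < n)%nat.
Proof.
  intros Hs Hn. pose proof (half_pow_pos n).
  pose proof (blk_bounds s ltac:(lra)) as [B _].
  destruct (le_lt_dec n (blk s)) as [h|h]; auto.
  pose proof (half_pow_le _ _ h). lra.
Qed.

Definition block_coord (n : nat) (t : R) : R := 2 ^ (n + 1) * (t - (1 - (/ 2) ^ n)).

Definition in_block (n : nat) (t : R) : Prop := 1 - (/2)^n <= t <= 1 - (/2)^(n+1).

Lemma block_coord_range n t : in_block n t -> unit_int (block_coord n t).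
Proof.
  unfold in_block, unit_int, block_coord. rewrite half_pow_add1. intros [H1 H2].
  pose proof (pow2_half_pow (n+1)). rewrite half_pow_add1 in H. pose proof (pow2_pos (n+1)).
  split; nra.
Qed.

Lemma block_coord_start n : block_coord n (1 - (/2)^n) = 0.
Proof. unfold block_coord. ring. Qed.

Lemma block_coord_end n : block_coord n (1 - (/2)^(n+1)) = 1.
Proof.
  unfold block_coord. pose proof (pow2_half_pow (n+1)). rewrite half_pow_add1 in *. nra.
Qed.

Lemma in_block_start n : in_block n (1 - (/2)^n).
Proof. unfold in_block. rewrite half_pow_add1. pose proof (half_pow_pos n). lra. Qed.

Lemma in_block_end n : in_block n (1 - (/2)^(n+1)).
Proof. unfold in_block. rewrite half_pow_add1. pose proof (half_pow_pos n). lra. Qed.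

Section Concatenation.

Variables (X : Type) (d : X -> X -> R) (x : X) (f : nat -> R -> X).
Hypothesis metric_d : is_metric d.
Hypothesis loop_f : forall n, is_loop d (f n) x.
Hypothesis diam_f : forall n s t, unit_int s -> unit_int t -> d (f n s) (f n t) <= (/ 2) ^ n.

Let dist_refl := metric_dist_refl d metric_d.

Lemma fpow_cont n b : cont_on_I d (fpow f x n b).
Proof.
  unfold fpow. destruct b; [apply loop_f|].
  intros t _ eps Heps. exists 1. split; [lra|]. intros. rewrite dist_refl. lra.
Qed.

Lemma fpow_diam n b s t : unit_int s -> unit_int t ->
  d (fpow f x n b s) (fpow f x n b t) <= (/ 2) ^ n.
Proof.
  intros Hs Ht. unfold fpow. destruct b; auto.
  rewrite dist_refl. left; apply half_pow_pos.
Qed.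

Lemma fpow_0 n b : fpow f x n b 0 = x.
Proof. unfold fpow. destruct b; [apply loop_f|reflexivity]. Qed.

Lemma fpow_1 n b : fpow f x n b 1 = x.
Proof. unfold fpow. destruct b; [apply loop_f|reflexivity]. Qed.

(* At the common endpoint of two blocks both pieces take the value [x]. *)
Lemma concat_on_block (a : cantor) n t :
  in_block n t -> concat f x a t = fpow f x n (a n) (block_coord n t).
Proof.
  intros [Ht1 [Ht2|Ht2]].
  - assert (Hb : blk t = n) by (apply blk_eq; lra).
    unfold concat. destruct (Rlt_dec t 1) as [h|h]; [rewrite Hb; reflexivity|].
    pose proof (half_pow_pos (n+1)). lra.
  - subst t. assert (Hb : blk (1 - (/2)^(n+1)) = (n+1)%nat).
    { apply blk_eq. pose proof (in_block_start (n+1)) as [_ h].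
      split; [lra|]. rewrite !half_pow_add1 in *. pose proof (half_pow_pos n). lra. }
    unfold concat. destruct (Rlt_dec _ 1) as [h|h].
    + rewrite Hb, block_coord_end. fold (block_coord (n+1) (1 - (/2)^(n+1))).
      rewrite block_coord_start, fpow_0, fpow_1. reflexivity.
    + pose proof (half_pow_pos (n+1)). lra.
Qed.

Definition cont_within (g : R -> X) (A : R -> Prop) (t : R) : Prop :=
  forall eps, eps > 0 -> exists delta, delta > 0 /\
    forall s, A s -> Rabs (s - t) < delta -> d (g s) (g t) < eps.

Lemma cont_within_cover g (A B C : R -> Prop) t r : r > 0 ->
  (forall s, A s -> Rabs (s - t) < r -> B s \/ C s) ->
  cont_within g B t -> cont_within g C t -> cont_within g A t.
Proof.
  intros Hr Hcov HB HC eps He.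
  destruct (HB eps He) as [d1 [Hd1 H1]], (HC eps He) as [d2 [Hd2 H2]].
  exists (Rmin r (Rmin d1 d2)). split; [repeat apply Rmin_pos; lra|].
  intros s Hs Hst.
  pose proof (Rmin_l r (Rmin d1 d2)). pose proof (Rmin_r r (Rmin d1 d2)).
  pose proof (Rmin_l d1 d2). pose proof (Rmin_r d1 d2).
  destruct (Hcov s Hs ltac:(lra)); [apply H1|apply H2]; auto; lra.
Qed.

Lemma concat_cont_within_block (a : cantor) n t :
  in_block n t -> cont_within (concat f x a) (in_block n) t.
Proof.
  intros Ht eps Heps.
  destruct (fpow_cont n (a n) (block_coord n t) (block_coord_range n t Ht) eps Heps)
    as [d0 [Hd0 Hc]].
  pose proof (pow2_pos (n+1)).
  exists (d0 / 2 ^ (n+1)). split; [apply Rdiv_lt_0_compat; auto|].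
  intros s Hs Hst. rewrite !(concat_on_block a n) by auto.
  apply Hc; [apply block_coord_range; auto|].
  replace (block_coord n s - block_coord n t) with (2 ^ (n+1) * (s - t))
    by (unfold block_coord; ring).
  rewrite Rabs_mult, Rabs_right by lra.
  apply Rmult_lt_compat_l with (r := 2 ^ (n+1)) in Hst; auto.
  replace (2 ^ (n + 1) * (d0 / 2 ^ (n + 1))) with d0 in Hst by (field; lra). exact Hst.
Qed.

Lemma concat_1 (a : cantor) : concat f x a 1 = x.
Proof. unfold concat. destruct (Rlt_dec 1 1); [lra|reflexivity]. Qed.

Lemma concat_near_1 (a : cantor) N s : 1 - (/2)^N <= s <= 1 ->
  d (concat f x a s) x <= (/2)^N.
Proof.
  intros [Hs1 Hs2]. destruct (Req_dec s 1) as [->|Es].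
  - rewrite concat_1, dist_refl. left; apply half_pow_pos.
  - assert (Hs : 0 <= s < 1) by (pose proof (half_pow_le1 N); lra).
    pose proof (blk_bounds s Hs) as [B1 B2].
    rewrite (concat_on_block a (blk s)) by (unfold in_block; lra).
    rewrite <- (fpow_0 (blk s) (a (blk s))) at 2.
    eapply Rle_trans; [apply fpow_diam|apply half_pow_le, blk_ge; auto].
    + apply block_coord_range. unfold in_block. lra.
    + unfold unit_int; lra.
Qed.

Lemma concat_cont_at_1 (a : cantor) : cont_within (concat f x a) unit_int 1.
Proof.
  intros eps Heps. destruct (half_pow_small eps Heps) as [N HN].
  exists ((/2)^N). split; [apply half_pow_pos|].
  intros s [Hs0 Hs1] Hst. rewrite Rabs_left1 in Hst by lra.
  rewrite concat_1. eapply Rle_lt_trans; [apply concat_near_1|exact HN]. lra.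
Qed.

(* A point of [0,1) is interior to its block, or it is the common endpoint of block [n] and
   block [n - 1]. *)
Lemma concat_cont (a : cantor) : cont_on_I d (concat f x a).
Proof.
  intros t Ht. change (cont_within (concat f x a) unit_int t).
  destruct (Req_dec t 1) as [->|Et]; [apply concat_cont_at_1|].
  destruct Ht as [Ht0 Ht1].
  pose proof (blk_bounds t ltac:(lra)) as Hb. set (n := blk t) in Hb.
  assert (Htn : in_block n t) by (unfold in_block; lra).
  pose proof (concat_cont_within_block a n t Htn) as Cn.
  pose proof (half_pow_pos (n+1)).
  destruct (Req_dec t (1 - (/2)^n)) as [Es|Es]; [destruct n as [|m]|].
  - refine (cont_within_cover _ _ _ _ _ (1 - (/2)^(0+1) - t) ltac:(lra) _ Cn Cn).
    intros s Hs Hst. left. apply Rabs_def2 in Hst. simpl in Es |- *.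
    unfold in_block, unit_int in *. simpl in *. lra.
  - assert (Htm : in_block m t)
      by (rewrite Es; replace (S m) with (m + 1)%nat by lia; apply in_block_end).
    refine (cont_within_cover _ _ _ _ _ (Rmin (1 - (/2)^(S m + 1) - t) ((/2)^(S m + 1)))
      ltac:(apply Rmin_pos; lra) _ Cn (concat_cont_within_block a m t Htm)).
    intros s [Hs0 _] Hst. apply Rabs_def2 in Hst.
    pose proof (Rmin_l (1 - (/2)^(S m + 1) - t) ((/2)^(S m + 1))).
    pose proof (Rmin_r (1 - (/2)^(S m + 1) - t) ((/2)^(S m + 1))).
    assert (Q : (/2)^(S m) = /2 * (/2)^m) by reflexivity.
    rewrite half_pow_add1 in *. rewrite Q in *. pose proof (half_pow_pos m).
    destruct (Rle_or_lt t s); [left|right]; unfold in_block; rewrite ?half_pow_add1, ?Q; lra.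
  - pose proof (half_pow_pos n).
    refine (cont_within_cover _ _ _ _ _ (Rmin (1 - (/2)^(n + 1) - t) (t - (1 - (/2)^n)))
      ltac:(apply Rmin_pos; lra) _ Cn Cn).
    intros s _ Hst. apply Rabs_def2 in Hst. left.
    pose proof (Rmin_l (1 - (/2)^(n + 1) - t) (t - (1 - (/2)^n))).
    pose proof (Rmin_r (1 - (/2)^(n + 1) - t) (t - (1 - (/2)^n))).
    unfold in_block. lra.
Qed.

Lemma concat_seg_block (a : cantor) k :
  same_simplex1 (seg (concat f x a) (1 - (/2)^k) (1 - (/2)^(k+1))) (fpow f x k (a k)).
Proof.
  intros u [Hu0 Hu1]. unfold seg. rewrite half_pow_add1. pose proof (half_pow_pos k).
  rewrite (concat_on_block a k) by (unfold in_block; rewrite half_pow_add1; nra).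
  f_equal. unfold block_coord.
  pose proof (pow2_half_pow (k+1)). rewrite half_pow_add1 in H0. nra.
Qed.

Lemma concat_seg_before (a b : cantor) k : (forall j, (j < k)%nat -> a j = b j) ->
  same_simplex1 (seg (concat f x a) 0 (1 - (/2)^k)) (seg (concat f x b) 0 (1 - (/2)^k)).
Proof.
  intros Hab u [Hu0 Hu1]. unfold seg. pose proof (half_pow_le1 k).
  destruct (Rlt_or_le (0 + (1 - (/2)^k - 0) * u) (1 - (/2)^k)) as [h|h].
  - assert (Hlt : (blk (0 + (1 - (/2)^k - 0) * u) < k)%nat) by (apply blk_lt; nra).
    unfold concat. destruct (Rlt_dec _ 1); auto. rewrite Hab by exact Hlt. reflexivity.
  - replace (0 + (1 - (/2)^k - 0) * u) with (1 - (/2)^k) by nra.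
    rewrite !(concat_on_block _ k) by apply in_block_start.
    rewrite block_coord_start, !fpow_0. reflexivity.
Qed.

Lemma concat_seg_after (a b : cantor) k : (forall j, (k < j)%nat -> a j = b j) ->
  same_simplex1 (seg (concat f x a) (1 - (/2)^(k+1)) 1) (seg (concat f x b) (1 - (/2)^(k+1)) 1).
Proof.
  intros Hab u [Hu0 Hu1]. unfold seg. pose proof (half_pow_pos (k+1)).
  set (t := 1 - (/2)^(k+1) + (1 - (1 - (/2)^(k+1))) * u).
  unfold concat. destruct (Rlt_dec t 1) as [h|h]; auto.
  rewrite Hab; [reflexivity|].
  assert (Ht : 1 - (/2)^(k+1) <= t) by (unfold t; nra).
  pose proof (blk_ge (k+1) t ltac:(split; [pose proof (half_pow_le1 (k+1))|]; lra) Ht). lia.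
Qed.

Lemma const_cont2 (y : X) : cont_on_simplex2 d (fun _ _ : R => y).
Proof. intros s t _ eps He. exists 1. split; [lra|]. intros. rewrite dist_refl. lra. Qed.

(* Subdividing both concatenations at the ends of block [k], the three pieces agree except on
   block [k], where they are [f k] and the constant loop (itself a boundary). *)
Lemma homologous_concat_single_diff (a b : cantor) k :
  a k = true -> b k = false -> (forall j, j <> k -> a j = b j) ->
  homologous d (concat f x a) (concat f x b) -> nulhomologous d (f k).
Proof.
  intros Hak Hbk Hab Hh. apply homologous_coeff in Hh. destruct Hh as [C0 [HC0 Hh]].
  set (c := 1 - (/2)^k). set (e := 1 - (/2)^(k+1)).
  assert (Ic : unit_int c) by (pose proof (half_pow_le1 k); pose proof (half_pow_pos k);
    unfold unit_int, c; lra).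
  assert (Ie : unit_int e) by (pose proof (half_pow_le1 (k+1)); pose proof (half_pow_pos (k+1));
    unfold unit_int, e; lra).
  apply nulhomologous_coeff.
  exists (subdivision (concat f x a) c e ++ neg_chain2 (subdivision (concat f x b) c e)
          ++ (1%Z, fun _ _ : R => x) :: C0).
  split.
  - repeat apply singular_chain2_app;
      [apply singular_subdivision; auto; apply concat_cont; auto..
      |apply singular_chain2_neg, singular_subdivision; auto; apply concat_cont; auto|].
    intros el [<-|Hel]; [apply const_cont2|apply HC0; auto].
  - intro p. rewrite !bd2_app, !coeff_app, coeff_bd2_neg_chain2, !coeff_bd2_subdivision.
    rewrite bd2_cons. cbn [coeff]. unfold face0, face1, face2.
    pose proof (concat_seg_block a k) as F1. pose proof (concat_seg_block b k) as F2.
    pose proof (concat_seg_before a b k ltac:(intros; apply Hab; lia)) as F3.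
    pose proof (concat_seg_after a b k ltac:(intros; apply Hab; lia)) as F4.
    rewrite Hak in F1. rewrite Hbk in F2. fold c e in F1, F2, F3, F4.
    rewrite (indicator_same_simplex1_l _ _ p F1), (indicator_same_simplex1_l _ _ p F2),
      (indicator_same_simplex1_l _ _ p F3), (indicator_same_simplex1_l _ _ p F4).
    specialize (Hh p). unfold fpow in *. lia.
Qed.

Lemma single_diff_not_sim : (forall n, ~ nulhomologous d (f n)) ->
  forall a b : cantor, differ_exactly_once a b -> ~ sim_rel d f x a b.
Proof.
  intros Hnul a b [k [Hk Hj]] Hs. apply (Hnul k).
  destruct (a k) eqn:Ea, (b k) eqn:Eb; try congruence.
  - exact (homologous_concat_single_diff a b k Ea Eb Hj Hs).
  - apply (homologous_concat_single_diff b a k); auto.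
    + intros j Hjk; symmetry; auto.
    + apply sim_rel_equivalence, Hs.
Qed.

End Concatenation.

(** * Compact metric spaces *)

Lemma inv_succ_pos k : 0 < / (INR k + 1).
Proof. apply Rinv_0_lt_compat. pose proof (pos_INR k); lra. Qed.

Lemma inv_succ_le k n : (k <= n)%nat -> / (INR n + 1) <= / (INR k + 1).
Proof.
  intro H. apply le_INR in H. apply Rinv_le_contravar; [pose proof (pos_INR k)|]; lra.
Qed.

Lemma inv_succ_small r : r > 0 -> exists k : nat, / (INR k + 1) < r.
Proof.
  intro Hr. destruct (archimed (/ r)) as [A _]. pose proof (Rinv_0_lt_compat r Hr).
  assert (Hz : (0 <= up (/ r))%Z) by (apply le_IZR; simpl; lra).
  exists (Z.to_nat (up (/ r))). rewrite INR_IZR_INZ, Z2Nat.id by exact Hz.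
  apply Rlt_le_trans with (/ / r); [|rewrite Rinv_inv; lra].
  apply Rinv_lt_contravar; [apply Rmult_lt_0_compat|]; lra.
Qed.

Lemma eventually_forall_le (L : nat) (P : nat -> nat -> Prop) :
  (forall n, (n <= L)%nat -> exists K, forall m, (m >= K)%nat -> P n m) ->
  exists K, forall n, (n <= L)%nat -> forall m, (m >= K)%nat -> P n m.
Proof.
  induction L; intro H.
  - destruct (H 0%nat (le_n 0)) as [K HK]. exists K. intros n Hn m Hm.
    replace n with 0%nat by lia. auto.
  - destruct IHL as [K1 HK1]; [intros n Hn; apply H; lia|].
    destruct (H (S L) (le_n _)) as [K2 HK2].
    exists (Nat.max K1 K2). intros n Hn m Hm.
    destruct (Nat.eq_dec n (S L)) as [->|h]; [apply HK2|apply HK1]; lia.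
Qed.

Lemma is_open_ball {X : Type} (d : X -> X -> R) y r : is_metric d -> is_open d (fun w => d y w < r).
Proof.
  intros [_ [_ [_ Mt]]] w Hw. exists (r - d y w). split; [lra|].
  intros z Hz. specialize (Mt y w z). lra.
Qed.

Lemma list_bounded_nat {X : Type} (l : list X) (N : X -> nat) :
  exists M, forall y, In y l -> (N y <= M)%nat.
Proof.
  induction l as [|a l [M HM]].
  - exists 0%nat. intros y [].
  - exists (Nat.max (N a) M). intros y [<-|Hy]; [lia|]. specialize (HM y Hy). lia.
Qed.

(* A Cauchy sequence without limit eventually leaves a ball around every point; finitely many of
   these balls cover the space. *)
Lemma compact_space_complete {X : Type} (d : X -> X -> R) :
  is_metric d -> compact_space d -> complete_metric d.
Proof.
  intros Hm Hc u Hu. pose proof (metric_dist_refl d Hm) as Mr.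
  pose proof Hm as [_ [_ [Ms Mt]]].
  apply NNPP. intro Hno.
  assert (Hy : forall y, exists eN : R * nat, fst eN > 0 /\
      forall m, (m >= snd eN)%nat -> d (u m) y > fst eN / 2).
  { intro y. apply NNPP. intro Hn. apply Hno. exists y. intros eps Heps.
    destruct (Hu (eps/2) ltac:(lra)) as [N HN]. exists N. intros n Hn'.
    apply NNPP. intro Hn2. apply Hn. exists (eps, N). split; [exact Heps|].
    intros m Hmn. specialize (HN n m Hn' Hmn). specialize (Mt (u n) (u m) y). simpl. lra. }
  destruct (choice _ Hy) as [E HE].
  destruct (Hc X (fun y w => d y w < fst (E y) / 2)) as [l Hl].
  - intro y. apply is_open_ball, Hm.
  - intro y. exists y. rewrite Mr. pose proof (proj1 (HE y)). lra.
  - destruct (list_bounded_nat l (fun y => snd (E y))) as [M HM].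
    destruct (Hl (u M)) as [y [Hy1 Hy2]].
    pose proof (proj2 (HE y) M (HM y Hy1)). rewrite Ms in Hy2. lra.
Qed.

Lemma compact_space_dense_seq {X : Type} (d : X -> X -> R) (x0 : X) :
  is_metric d -> compact_space d ->
  exists dx : nat -> X, forall y eps, eps > 0 -> exists n, d y (dx n) < eps.
Proof.
  intros Hm Hc.
  assert (Hl : forall m : nat, exists l : list X,
      forall y, exists z, In z l /\ d z y < / (INR m + 1)).
  { intro m. apply (Hc X (fun z w => d z w < / (INR m + 1))).
    - intro z. apply is_open_ball; auto.
    - intro y. exists y. rewrite metric_dist_refl by exact Hm. apply inv_succ_pos. }
  destruct (choice _ Hl) as [L HL].
  exists (fun n => let '(m, i) := Cantor.of_nat n in nth i (L m) x0).
  intros y eps Heps. destruct (inv_succ_small eps Heps) as [m Hm'].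
  destruct (HL m y) as [z [Hz1 Hz2]].
  destruct (In_nth _ _ x0 Hz1) as [i [_ Hi]].
  exists (Cantor.to_nat (m, i)). rewrite Cantor.cancel_of_to, Hi.
  destruct Hm as [_ [_ [Ms _]]]. rewrite Ms. lra.
Qed.

(** * The product metric on sequences *)

Lemma ex_series_half_pow : ex_series (fun n => (/2)^n).
Proof. apply ex_series_geom. rewrite Rabs_right; lra. Qed.

Lemma Series_0 : Series (fun _ => 0) = 0.
Proof.
  rewrite (Series_ext _ (fun n => 0 * (/2)^n)) by (intro; ring).
  rewrite Series_scal_l. ring.
Qed.

Lemma Series_nonneg (a : nat -> R) : (forall n, 0 <= a n) -> ex_series a -> 0 <= Series a.
Proof.
  intros H Ha. rewrite <- Series_0. apply Series_le; auto. intro n; split; [lra|auto].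
Qed.

Lemma Series_split (a : nat -> R) L : ex_series a ->
  Series a = sum_f_R0 a L + Series (fun k => a (S L + k)%nat).
Proof. intro H. rewrite (Series_incr_n a (S L)); auto; lia. Qed.

Lemma Series_half_pow_tail L : Series (fun k => (/2)^(S L + k)) = 2 * (/2)^(S L).
Proof.
  rewrite (Series_ext _ (fun k => (/2)^(S L) * (/2)^k)) by (intro; apply pow_add).
  rewrite Series_scal_l, Series_geom by (rewrite Rabs_right; lra). field.
Qed.

Lemma sum_f_R0_le_const (a : nat -> R) L e : (forall n, (n <= L)%nat -> a n <= e) ->
  sum_f_R0 a L <= INR (S L) * e.
Proof.
  intro H. eapply Rle_trans; [apply (sum_Rle a (fun _ => e)); auto|].
  rewrite sum_cte. lra.
Qed.

Section SequenceMetric.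

Context {Y : Type} (rho : Y -> Y -> R).
Hypothesis rho_metric : is_metric rho.
Hypothesis rho_le_1 : forall y y', rho y y' <= 1.

Definition seq_dist_term (z z' : nat -> Y) (n : nat) : R := (/2)^n * rho (z n) (z' n).

Definition seq_dist (z z' : nat -> Y) : R := Series (seq_dist_term z z').

Lemma seq_dist_term_bounds z z' n : 0 <= seq_dist_term z z' n <= (/2)^n.
Proof.
  unfold seq_dist_term. pose proof (half_pow_pos n).
  pose proof (proj1 rho_metric (z n) (z' n)). specialize (rho_le_1 (z n) (z' n)). split; nra.
Qed.

Lemma ex_series_seq_dist_term z z' : ex_series (seq_dist_term z z').
Proof.
  apply (@ex_series_le R_AbsRing R_CompleteNormedModule _ (fun n => (/2)^n));
    [|apply ex_series_half_pow].
  intro n. pose proof (seq_dist_term_bounds z z' n). change norm with Rabs. simpl.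
  rewrite Rabs_right; lra.
Qed.

Lemma seq_dist_le_partial_sum z z' L :
  seq_dist z z' <= sum_f_R0 (seq_dist_term z z') L + 2 * (/2)^(S L).
Proof.
  unfold seq_dist. rewrite (Series_split _ L) by apply ex_series_seq_dist_term.
  apply Rplus_le_compat_l. rewrite <- Series_half_pow_tail.
  apply Series_le; [intro n; apply seq_dist_term_bounds|].
  apply ex_series_incr_n, ex_series_half_pow.
Qed.

Lemma seq_dist_term_le z z' n : seq_dist_term z z' n <= seq_dist z z'.
Proof.
  unfold seq_dist. rewrite (Series_split _ n) by apply ex_series_seq_dist_term.
  pose proof (fun k => proj1 (seq_dist_term_bounds z z' k)) as Hpos.
  assert (0 <= Series (fun k => seq_dist_term z z' (S n + k)%nat)).
  { apply Series_nonneg; [auto|]. apply ex_series_incr_n, ex_series_seq_dist_term. }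
  assert (seq_dist_term z z' n <= sum_f_R0 (seq_dist_term z z') n).
  { destruct n; simpl; [lra|]. pose proof (cond_pos_sum _ n Hpos). lra. }
  lra.
Qed.

Lemma seq_dist_coord z z' n : rho (z n) (z' n) <= 2^n * seq_dist z z'.
Proof.
  pose proof (seq_dist_term_le z z' n). unfold seq_dist_term in H.
  pose proof (pow2_pos n). pose proof (pow2_half_pow n).
  replace (rho (z n) (z' n)) with (2^n * ((/2)^n * rho (z n) (z' n)))
    by (rewrite <- Rmult_assoc, H1; ring).
  apply Rmult_le_compat_l; lra.
Qed.

(* Closeness in the first [L + 1] coordinates gives closeness, the tail being at most
   [2 (1/2)^(L+1)]. *)
Lemma seq_dist_small eps : eps > 0 -> exists L e, e > 0 /\ forall z z',
  (forall n, (n <= L)%nat -> rho (z n) (z' n) < e) -> seq_dist z z' < eps.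
Proof.
  intro Heps. destruct (half_pow_small (eps/4)) as [L HL]; [lra|].
  pose proof (lt_0_INR (S L) (Nat.lt_0_succ L)).
  exists L, (eps / (2 * INR (S L))). split; [apply Rdiv_lt_0_compat; lra|].
  intros z z' Hz. eapply Rle_lt_trans; [apply (seq_dist_le_partial_sum z z' L)|].
  assert (sum_f_R0 (seq_dist_term z z') L <= INR (S L) * (eps / (2 * INR (S L)))).
  { apply sum_f_R0_le_const. intros n Hn. unfold seq_dist_term.
    pose proof (half_pow_le1 n). pose proof (half_pow_pos n).
    pose proof (proj1 rho_metric (z n) (z' n)). specialize (Hz n Hn). nra. }
  replace (INR (S L) * (eps / (2 * INR (S L)))) with (eps / 2) in H0 by (field; lra).
  change ((/2)^(S L)) with (/2 * (/2)^L). lra.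
Qed.

Lemma seq_dist_metric : is_metric seq_dist.
Proof.
  pose proof rho_metric as [Mp [Me [Ms Mt]]]. pose proof (metric_dist_refl rho rho_metric) as Mr.
  split; [|split; [|split]].
  - intros z z'. apply Series_nonneg; [intro; apply seq_dist_term_bounds|].
    apply ex_series_seq_dist_term.
  - intros z z'. split.
    + intro H. apply functional_extensionality. intro n. apply Me.
      pose proof (seq_dist_coord z z' n). rewrite H, Rmult_0_r in H0.
      specialize (Mp (z n) (z' n)). lra.
    + intros <-. unfold seq_dist. rewrite <- Series_0. apply Series_ext. intro n.
      unfold seq_dist_term. rewrite Mr; ring.
  - intros z z'. apply Series_ext. intro n. unfold seq_dist_term. rewrite Ms; auto.
  - intros z1 z2 z3. unfold seq_dist.
    rewrite <- Series_plus by apply ex_series_seq_dist_term.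
    apply Series_le.
    + intro n. split; [apply seq_dist_term_bounds|]. unfold seq_dist_term.
      pose proof (half_pow_pos n). specialize (Mt (z1 n) (z2 n) (z3 n)). nra.
    + apply (ex_series_plus (seq_dist_term z1 z2) (seq_dist_term z2 z3));
        apply ex_series_seq_dist_term.
Qed.

Lemma seq_dist_complete : complete_metric rho -> complete_metric seq_dist.
Proof.
  intros Hc u Hu.
  assert (Hcoord : forall n, exists w, forall eps, eps > 0 ->
      exists N, forall m, (m >= N)%nat -> rho (u m n) w < eps).
  { intro n. apply Hc. intros eps Heps. pose proof (pow2_pos n).
    destruct (Hu (eps / 2^n)) as [N HN]; [apply Rdiv_lt_0_compat; lra|].
    exists N. intros m m' Hm Hm'. specialize (HN m m' Hm Hm').
    pose proof (seq_dist_coord (u m) (u m') n).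
    apply Rmult_lt_compat_l with (r := 2^n) in HN; [|lra].
    replace (2 ^ n * (eps / 2 ^ n)) with eps in HN by (field; lra). lra. }
  destruct (choice _ Hcoord) as [w Hw].
  exists w. intros eps Heps.
  destruct (seq_dist_small eps Heps) as [L [e [He Hsmall]]].
  destruct (eventually_forall_le L (fun n m => rho (u m n) (w n) < e)) as [K HK].
  { intros n _. apply Hw; auto. }
  exists K. intros m Hm. apply Hsmall. intros n Hn. apply HK; auto.
Qed.

Fixpoint decode_list (L c : nat) : list nat :=
  match L with
  | O => nil
  | S L' => let '(a, c') := Cantor.of_nat c in a :: decode_list L' c'
  end.

Fixpoint encode_list (l : list nat) : nat :=
  match l with
  | nil => 0%nat
  | a :: l' => Cantor.to_nat (a, encode_list l')
  end.

Lemma decode_encode_list l : decode_list (length l) (encode_list l) = l.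
Proof.
  induction l; [reflexivity|]. cbn [decode_list encode_list length].
  rewrite Cantor.cancel_of_to, IHl. reflexivity.
Qed.

(* Dense set: sequences with finitely many prescribed terms from [dy], then [dy 0]. *)
Lemma seq_dist_separable (dy : nat -> Y) :
  (forall y eps, eps > 0 -> exists n, rho y (dy n) < eps) -> separable_metric seq_dist.
Proof.
  intros Hd.
  exists (fun code => let '(L, c) := Cantor.of_nat code in
                     Some (fun n => dy (nth n (decode_list L c) 0%nat))).
  intros z eps Heps.
  destruct (seq_dist_small eps Heps) as [L [e [He Hsmall]]].
  destruct (choice (fun n k => rho (z n) (dy k) < e) (fun n => Hd (z n) e He)) as [g Hg].
  set (lst := map g (seq 0 (S L))).
  assert (Hlen : length lst = S L) by (unfold lst; rewrite length_map, length_seq; auto).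
  exists (Cantor.to_nat (S L, encode_list lst)).
  eexists. rewrite Cantor.cancel_of_to, <- Hlen, decode_encode_list. split; [reflexivity|].
  apply Hsmall. intros n Hn.
  unfold lst. rewrite (nth_indep _ _ (g 0%nat)) by (rewrite length_map, length_seq; lia).
  rewrite map_nth, seq_nth by lia. apply Hg.
Qed.

Lemma seq_dist_polish (dy : nat -> Y) : complete_metric rho ->
  (forall y eps, eps > 0 -> exists n, rho y (dy n) < eps) -> polish_metric seq_dist.
Proof.
  intros Hc Hd. split; [apply seq_dist_metric|split; [apply seq_dist_complete; auto|]].
  eapply seq_dist_separable; eauto.
Qed.

End SequenceMetric.

(** * The witness space *)

Definition witness (X : Type) := nat -> nat * X.

Section TaggedMetric.

Context {X : Type} (d : X -> X -> R).
Hypothesis metric_d : is_metric d.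

Definition tagged_dist (p q : nat * X) : R :=
  if Nat.eq_dec (fst p) (fst q) then Rmin 1 (d (snd p) (snd q)) else 1.

Lemma tagged_dist_le_1 p q : tagged_dist p q <= 1.
Proof. unfold tagged_dist. destruct (Nat.eq_dec _ _); [apply Rmin_l|lra]. Qed.

Lemma tagged_dist_metric : is_metric tagged_dist.
Proof.
  destruct metric_d as [Mp [Me [Ms Mt]]]. unfold tagged_dist.
  assert (Hm : forall u, 0 <= u -> 0 <= Rmin 1 u <= 1)
    by (intros; unfold Rmin; destruct (Rle_dec 1 u); lra).
  split; [|split; [|split]].
  - intros [a y] [b y']; simpl. destruct (Nat.eq_dec a b); [apply Hm, Mp|lra].
  - intros [a y] [b y']; simpl. split.
    + destruct (Nat.eq_dec a b) as [<-|h]; [|lra].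
      unfold Rmin. destruct (Rle_dec 1 (d y y')); [lra|]. intro H. apply Me in H. subst; auto.
    + intro H. injection H as <- <-. destruct (Nat.eq_dec a a); [|congruence].
      rewrite (proj2 (Me y y) eq_refl). unfold Rmin; destruct (Rle_dec 1 0); lra.
  - intros [a y] [b y']; simpl.
    destruct (Nat.eq_dec a b), (Nat.eq_dec b a); try lra; try congruence.
  - intros [a y] [b y'] [c y'']; simpl.
    destruct (Nat.eq_dec a c), (Nat.eq_dec a b), (Nat.eq_dec b c); subst; try congruence;
      try (pose proof (Hm _ (Mp y y')); pose proof (Hm _ (Mp y' y'')); pose proof (Hm _ (Mp y y''));
           lra).
    specialize (Mt y y' y''). pose proof (Mp y y'). pose proof (Mp y' y'').
    unfold Rmin. repeat destruct (Rle_dec _ _); lra.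
Qed.

Lemma tagged_dist_complete : complete_metric d -> complete_metric tagged_dist.
Proof.
  intros Hc u Hu.
  destruct (Hu 1 ltac:(lra)) as [N0 HN0].
  assert (Hfst : forall m, (m >= N0)%nat -> fst (u m) = fst (u N0)).
  { intros m Hm'. specialize (HN0 m N0 Hm' (le_n _)). unfold tagged_dist in HN0.
    destruct (Nat.eq_dec _ _); auto. lra. }
  destruct (Hc (fun m => snd (u (N0 + m)%nat))) as [y Hy].
  { intros eps Heps. destruct (Hu (Rmin eps 1)) as [N HN]; [apply Rmin_pos; lra|].
    exists N. intros m n Hm' Hn. specialize (HN (N0 + m)%nat (N0 + n)%nat ltac:(lia) ltac:(lia)).
    unfold tagged_dist in HN. unfold Rmin in *.
    destruct (Nat.eq_dec _ _); repeat destruct (Rle_dec _ _); lra. }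
  exists (fst (u N0), y). intros eps Heps.
  destruct (Hy eps Heps) as [N HN].
  exists (N0 + N)%nat. intros n Hn. unfold tagged_dist. simpl.
  rewrite (Hfst n) by lia. destruct (Nat.eq_dec _ _); [|congruence].
  specialize (HN (n - N0)%nat ltac:(lia)). replace (N0 + (n - N0))%nat with n in HN by lia.
  eapply Rle_lt_trans; [apply Rmin_r|auto].
Qed.

Lemma tagged_dist_dense (dx : nat -> X) :
  (forall y eps, eps > 0 -> exists n, d y (dx n) < eps) ->
  forall p eps, eps > 0 ->
    exists n, tagged_dist p (let '(a, b) := Cantor.of_nat n in (a, dx b)) < eps.
Proof.
  intros Hd [a y] eps Heps. destruct (Hd y eps Heps) as [b Hb].
  exists (Cantor.to_nat (a, b)). rewrite Cantor.cancel_of_to. unfold tagged_dist; simpl.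
  destruct (Nat.eq_dec a a); [|congruence]. eapply Rle_lt_trans; [apply Rmin_r|auto].
Qed.

Definition witness_dist : witness X -> witness X -> R := seq_dist tagged_dist.

Lemma witness_dist_polish (x0 : X) : compact_space d -> polish_metric witness_dist.
Proof.
  intros Hc. destruct (compact_space_dense_seq d x0 metric_d Hc) as [dx Hdx].
  apply (seq_dist_polish _ tagged_dist_metric tagged_dist_le_1
           (fun n => let '(a, b) := Cantor.of_nat n in (a, dx b))).
  - apply tagged_dist_complete, compact_space_complete; auto.
  - apply tagged_dist_dense; auto.
Qed.

Definition witness_conv (zn : nat -> witness X) (z : witness X) : Prop :=
  forall eps, eps > 0 -> exists M, forall n, (n >= M)%nat -> witness_dist (zn n) z < eps.

Lemma witness_conv_tag zn z : witness_conv zn z ->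
  forall m, exists M, forall n, (n >= M)%nat -> fst (zn n m) = fst (z m).
Proof.
  intros Hz m. destruct (Hz ((/2)^m) (half_pow_pos m)) as [M HM]. exists M.
  intros n Hn. specialize (HM n Hn).
  pose proof (seq_dist_coord _ tagged_dist_metric tagged_dist_le_1 (zn n) z m) as T.
  fold (witness_dist (zn n) z) in T. unfold tagged_dist in T.
  destruct (Nat.eq_dec _ _); auto.
  pose proof (pow2_pos m). pose proof (pow2_half_pow m). nra.
Qed.

Lemma witness_conv_point zn z : witness_conv zn z ->
  forall m eps, eps > 0 -> exists M, forall n, (n >= M)%nat -> d (snd (zn n m)) (snd (z m)) < eps.
Proof.
  intros Hz m eps He. pose proof (pow2_pos m). pose proof (pow2_half_pow m).
  destruct (witness_conv_tag zn z Hz m) as [M1 HM1].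
  destruct (Hz (Rmin 1 eps / 2^m)) as [M2 HM2]; [apply Rdiv_lt_0_compat; [apply Rmin_pos|]; lra|].
  exists (Nat.max M1 M2). intros n Hn. specialize (HM2 n ltac:(lia)).
  pose proof (seq_dist_coord _ tagged_dist_metric tagged_dist_le_1 (zn n) z m) as T.
  fold (witness_dist (zn n) z) in T. unfold tagged_dist in T. rewrite HM1 in T by lia.
  destruct (Nat.eq_dec _ _) as [_|]; [|congruence].
  apply Rmult_lt_compat_l with (r := 2^m) in HM2; [|lra].
  replace (2 ^ m * (Rmin 1 eps / 2 ^ m)) with (Rmin 1 eps) in HM2 by (field; lra).
  pose proof (Rmin_l 1 eps). pose proof (Rmin_r 1 eps).
  unfold Rmin at 1 in T. destruct (Rle_dec 1 _); lra.
Qed.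

End TaggedMetric.

(** * Uniform continuity on the 2-simplex *)

Lemma cluster_point_unit (u : nat -> R) : (forall n, 0 <= u n <= 1) ->
  exists l, 0 <= l <= 1 /\ forall k, exists p, (p >= k)%nat /\ Rabs (u p - l) < / (INR k + 1).
Proof.
  intro Hu. destruct (Bolzano_Weierstrass u _ (compact_P3 0 1) Hu) as [l Hl].
  assert (Hk : forall k, exists p, (p >= k)%nat /\ Rabs (u p - l) < / (INR k + 1)).
  { intro k. destruct (Hl (disc l (mkposreal _ (inv_succ_pos k))) k) as [p [Hp1 Hp2]].
    - exists (mkposreal _ (inv_succ_pos k)). intros y Hy; exact Hy.
    - exists p. split; auto. }
  exists l. split; auto.
  split; apply Rnot_lt_le; intro h;
    [destruct (inv_succ_small (- l)) as [k Hk']|destruct (inv_succ_small (l - 1)) as [k Hk']];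
    try lra; destruct (Hk k) as [p [_ Hp]]; pose proof (Hu p); apply Rabs_def2 in Hp; lra.
Qed.

Lemma simplex2_seq_cluster (S T : nat -> R) : (forall n, simplex2_pt (S n) (T n)) ->
  exists ls lt (idx : nat -> nat), simplex2_pt ls lt /\ forall k, (idx k >= k)%nat /\
    Rabs (S (idx k) - ls) < / (INR k + 1) /\ Rabs (T (idx k) - lt) < / (INR k + 1).
Proof.
  intro HST.
  destruct (cluster_point_unit S) as [ls [Hls Hcs]]; [intro n; destruct (HST n) as [? [? ?]]; lra|].
  destruct (choice _ Hcs) as [phi Hphi].
  destruct (cluster_point_unit (fun k => T (phi k))) as [lt [Hlt Hct]];
    [intro n; destruct (HST (phi n)) as [? [? ?]]; lra|].
  destruct (choice _ Hct) as [psi Hpsi].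
  assert (Hidx : forall k, (phi (psi k) >= k)%nat /\ Rabs (S (phi (psi k)) - ls) < / (INR k + 1)
                    /\ Rabs (T (phi (psi k)) - lt) < / (INR k + 1)).
  { intro k. destruct (Hpsi k) as [h1 h2]. destruct (Hphi (psi k)) as [h3 h4].
    split; [lia|split; auto].
    eapply Rlt_le_trans; [exact h4|apply inv_succ_le; lia]. }
  exists ls, lt, (fun k => phi (psi k)). split; auto.
  split; [lra|split; [lra|]]. apply Rnot_lt_le. intro h.
  destruct (inv_succ_small ((ls + lt - 1)/2)) as [k Hk]; [lra|].
  destruct (Hidx k) as [_ [h1 h2]]. destruct (HST (phi (psi k))) as [_ [_ h3]].
  apply Rabs_def2 in h1. apply Rabs_def2 in h2. lra.
Qed.

(* Otherwise a sequence of pairs of ever closer points with images at least [eps] apart would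
   have a cluster point at which [sg] is not continuous. *)
Lemma simplex2_uniform_cont {X : Type} (d : X -> X -> R) (sg : R -> R -> X) :
  is_metric d -> cont_on_simplex2 d sg ->
  forall eps, eps > 0 -> exists delta, delta > 0 /\
    forall s t s' t', simplex2_pt s t -> simplex2_pt s' t' ->
      Rabs (s' - s) + Rabs (t' - t) < delta -> d (sg s' t') (sg s t) < eps.
Proof.
  intros [Mp [Me [Ms Mt]]] Hc eps Heps. apply NNPP. intro Hno.
  assert (Hn : forall n : nat, exists q : (R * R) * (R * R),
     simplex2_pt (fst (fst q)) (snd (fst q)) /\ simplex2_pt (fst (snd q)) (snd (snd q)) /\
     Rabs (fst (snd q) - fst (fst q)) + Rabs (snd (snd q) - snd (fst q)) < / (INR n + 1) /\
     d (sg (fst (snd q)) (snd (snd q))) (sg (fst (fst q)) (snd (fst q))) >= eps).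
  { intro n. apply NNPP. intro Hq. apply Hno. exists (/ (INR n + 1)).
    split; [apply inv_succ_pos|].
    intros s t s' t' H1 H2 H3. apply Rnot_ge_lt. intro H4. apply Hq.
    exists ((s, t), (s', t')). auto. }
  destruct (choice _ Hn) as [Q HQ].
  destruct (simplex2_seq_cluster (fun n => fst (fst (Q n))) (fun n => snd (fst (Q n))))
    as [ls [lt [idx [HL Hidx]]]]; [intro n; apply HQ|].
  destruct (Hc ls lt HL (eps/2) ltac:(lra)) as [d0 [Hd0 Hcont]].
  destruct (inv_succ_small (d0/3)) as [k Hk]; [lra|].
  destruct (Hidx k) as [hi [h1 h2]].
  destruct (HQ (idx k)) as [P1 [P2 [P3 P4]]].
  destruct (Q (idx k)) as [[s1 t1] [s2 t2]]. simpl in *.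
  assert (h3 : / (INR (idx k) + 1) <= / (INR k + 1)) by (apply inv_succ_le; lia).
  assert (E1 : d (sg s1 t1) (sg ls lt) < eps/2) by (apply Hcont; auto; lra).
  assert (E2 : d (sg s2 t2) (sg ls lt) < eps/2).
  { apply Hcont; auto.
    pose proof (Rabs_triang (s2 - s1) (s1 - ls)). pose proof (Rabs_triang (t2 - t1) (t1 - lt)).
    replace (s2 - s1 + (s1 - ls)) with (s2 - ls) in H by ring.
    replace (t2 - t1 + (t1 - lt)) with (t2 - lt) in H0 by ring. lra. }
  specialize (Mt (sg s2 t2) (sg ls lt) (sg s1 t1)). rewrite (Ms (sg ls lt)) in Mt. lra.
Qed.

(** * Continuous extension from dyadic points *)

Definition dyadic_pt (q : nat) : R * R :=
  let '(m, r) := Cantor.of_nat q in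
  let '(i, j) := Cantor.of_nat r in (INR i * (/2) ^ m, INR j * (/2) ^ m).

Definition l1_dist (p p' : R * R) : R := Rabs (fst p - fst p') + Rabs (snd p - snd p').

Definition in_simplex2 (p : R * R) : Prop := simplex2_pt (fst p) (snd p).

Lemma l1_dist_sym p p' : l1_dist p p' = l1_dist p' p.
Proof. unfold l1_dist. rewrite (Rabs_minus_sym (fst p)), (Rabs_minus_sym (snd p)). auto. Qed.

Lemma l1_dist_triangle p p' p'' : l1_dist p p'' <= l1_dist p p' + l1_dist p' p''.
Proof.
  unfold l1_dist.
  pose proof (Rabs_triang (fst p - fst p') (fst p' - fst p'')).
  pose proof (Rabs_triang (snd p - snd p') (snd p' - snd p'')).
  replace (fst p - fst p' + (fst p' - fst p'')) with (fst p - fst p'') in H by ring.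
  replace (snd p - snd p' + (snd p' - snd p'')) with (snd p - snd p'') in H0 by ring.
  lra.
Qed.

Lemma dyadic_below s m : 0 <= s ->
  exists i : nat, 0 <= INR i * (/2)^m <= s /\ s < INR i * (/2)^m + (/2)^m.
Proof.
  intro Hs. pose proof (pow2_pos m). pose proof (pow2_half_pow m). pose proof (half_pow_pos m).
  set (r := s * 2^m). assert (Hr : 0 <= r) by (unfold r; nra).
  pose proof (base_Int_part r) as [B1 B2].
  assert (Hz : (0 <= Int_part r)%Z).
  { destruct (Z_le_gt_dec 0 (Int_part r)) as [h|h]; auto.
    exfalso. apply Z.gt_lt, Zlt_le_succ, IZR_le in h. rewrite succ_IZR in h. lra. }
  exists (Z.to_nat (Int_part r)). rewrite INR_IZR_INZ, Z2Nat.id by exact Hz.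
  assert (Es : s = r * (/2)^m) by (unfold r; rewrite Rmult_assoc, H0; ring).
  apply IZR_le in Hz. clearbody r. subst s. split; [split|]; nra.
Qed.

Lemma dyadic_pt_dense p eps : in_simplex2 p -> eps > 0 ->
  exists q, in_simplex2 (dyadic_pt q) /\ l1_dist (dyadic_pt q) p < eps.
Proof.
  destruct p as [s t]. intros [Hs [Ht Hst]] He. simpl in *.
  destruct (half_pow_small (eps/2)) as [m Hm]; [lra|].
  destruct (dyadic_below s m Hs) as [i Hi], (dyadic_below t m Ht) as [j Hj].
  exists (Cantor.to_nat (m, Cantor.to_nat (i, j))).
  unfold dyadic_pt. rewrite !Cantor.cancel_of_to.
  split.
  - unfold in_simplex2; simpl. repeat split; lra.
  - unfold l1_dist; simpl. rewrite !Rabs_left1 by lra. lra.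
Qed.

(* Two points within [mod_radius w j] of a common point are closer than [1 / (w i + 1)] for every
   [i <= j]. *)
Fixpoint mod_radius (w : nat -> nat) (j : nat) : R :=
  match j with
  | O => / (2 * (INR (w O) + 1))
  | S j' => Rmin (mod_radius w j') (/ (2 * (INR (w (S j')) + 1)))
  end.

Lemma mod_radius_pos w j : 0 < mod_radius w j.
Proof.
  assert (H : forall k, 0 < / (2 * (INR k + 1)))
    by (intro k; apply Rinv_0_lt_compat; pose proof (pos_INR k); lra).
  induction j; simpl; [apply H|]. apply Rmin_pos; auto.
Qed.

Lemma mod_radius_anti w i j : (i <= j)%nat -> mod_radius w j <= mod_radius w i.
Proof. induction 1; [lra|]. simpl. eapply Rle_trans; [apply Rmin_l|auto]. Qed.

Lemma mod_radius_half w j : 2 * mod_radius w j <= / (INR (w j) + 1).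
Proof.
  assert (H : mod_radius w j <= / (2 * (INR (w j) + 1))) by (destruct j; simpl; [lra|apply Rmin_r]).
  pose proof (pos_INR (w j)).
  replace (/ (2 * (INR (w j) + 1))) with (/ 2 * / (INR (w j) + 1)) in H by (field; lra).
  lra.
Qed.

Lemma mod_radius_ext w w' j : (forall i, (i <= j)%nat -> w i = w' i) ->
  mod_radius w j = mod_radius w' j.
Proof.
  induction j; intro H; simpl.
  - rewrite H; auto.
  - rewrite IHj by (intros; apply H; lia). rewrite H; auto.
Qed.

Section Extension.

Context {X : Type} (d : X -> X -> R) (x0 : X).
Hypothesis metric_d : is_metric d.
Hypothesis complete_d : complete_metric d.

Definition dyadic_modulus (v : nat -> X) (w : nat -> nat) : Prop :=
  forall j q q', in_simplex2 (dyadic_pt q) -> in_simplex2 (dyadic_pt q') ->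
    l1_dist (dyadic_pt q) (dyadic_pt q') < / (INR (w j) + 1) -> d (v q) (v q') <= (/2)^j.

Definition extends_at (v : nat -> X) (w : nat -> nat) (p : R * R) (y : X) : Prop :=
  forall j q, in_simplex2 (dyadic_pt q) -> l1_dist (dyadic_pt q) p < mod_radius w j ->
    d (v q) y <= (/2)^j.

(* [x0] is a junk value, used only when [v] has no extension at [(s, t)]. *)
Definition extension (v : nat -> X) (w : nat -> nat) : R -> R -> X :=
  fun s t => epsilon (inhabits x0) (fun y => extends_at v w (s, t) y).

Lemma extends_at_unique v w p y y' :
  in_simplex2 p -> extends_at v w p y -> extends_at v w p y' -> y = y'.
Proof.
  intros Hp H1 H2. apply metric_d.
  assert (H : forall j, d y y' <= 2 * (/2)^j).
  { intro j. destruct (dyadic_pt_dense p (mod_radius w j) Hp (mod_radius_pos w j)) as [q [Hq1 Hq2]].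
    specialize (H1 j q Hq1 Hq2). specialize (H2 j q Hq1 Hq2).
    pose proof (metric_triangle_via d metric_d y (v q) y'). lra. }
  apply Rle_antisym; [|apply metric_d]. apply Rle_plus_epsilon. intros eps He.
  destruct (half_pow_small (eps/2)) as [j Hj]; [lra|]. specialize (H j). lra.
Qed.

(* The values at dyadic points [Q n] within [mod_radius w n] of [p] form a Cauchy sequence. *)
Lemma extends_at_exists v w p : dyadic_modulus v w -> in_simplex2 p -> exists y, extends_at v w p y.
Proof.
  intros Hv Hp. pose proof metric_d as [Mp [Me [Ms Mt]]].
  destruct (choice (fun n q => in_simplex2 (dyadic_pt q) /\ l1_dist (dyadic_pt q) p < mod_radius w n)
    (fun n => dyadic_pt_dense p _ Hp (mod_radius_pos w n))) as [Q HQ].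
  assert (Key : forall j q n, in_simplex2 (dyadic_pt q) -> l1_dist (dyadic_pt q) p < mod_radius w j ->
            (n >= j)%nat -> d (v q) (v (Q n)) <= (/2)^j).
  { intros j q n H1 H2 H3. apply Hv; auto; [apply HQ|].
    pose proof (l1_dist_triangle (dyadic_pt q) p (dyadic_pt (Q n))). rewrite (l1_dist_sym p) in H.
    pose proof (proj2 (HQ n)). pose proof (mod_radius_anti w j n H3). pose proof (mod_radius_half w j).
    lra. }
  destruct (complete_d (fun n => v (Q n))) as [y Hy].
  - intros eps He. destruct (half_pow_small eps He) as [N HN].
    exists N. intros m n Hm' Hn. eapply Rle_lt_trans; [|exact HN].
    apply (Key N (Q m) n); try apply HQ; auto.
    pose proof (proj2 (HQ m)). pose proof (mod_radius_anti w N m Hm'). lra.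
  - exists y. intros j q H1 H2. apply Rle_plus_epsilon. intros eps He.
    destruct (Hy eps He) as [N HN].
    specialize (HN (Nat.max N j) ltac:(lia)).
    specialize (Key j q (Nat.max N j) H1 H2 ltac:(lia)).
    specialize (Mt (v q) (v (Q (Nat.max N j))) y). lra.
Qed.

Lemma extension_spec v w s t : dyadic_modulus v w -> in_simplex2 (s, t) ->
  extends_at v w (s, t) (extension v w s t).
Proof. intros Hv Hp. unfold extension. apply epsilon_spec, extends_at_exists; auto. Qed.

Lemma extension_cont v w : dyadic_modulus v w -> cont_on_simplex2 d (extension v w).
Proof.
  intros Hv s t Hst eps He. pose proof (mod_radius_pos w).
  destruct (half_pow_small (eps/2)) as [j Hj]; [lra|].
  exists (mod_radius w j / 2). split; [specialize (H j); lra|].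
  intros s' t' Hst' Hd.
  destruct (dyadic_pt_dense (s, t) (mod_radius w j / 2)) as [q [Hq1 Hq2]]; auto.
  { specialize (H j); lra. }
  assert (E1 := extension_spec v w s t Hv Hst j q Hq1 ltac:(specialize (H j); lra)).
  assert (Hq3 : l1_dist (dyadic_pt q) (s', t') < mod_radius w j).
  { pose proof (l1_dist_triangle (dyadic_pt q) (s, t) (s', t')).
    assert (l1_dist (s, t) (s', t') = Rabs (s' - s) + Rabs (t' - t)).
    { unfold l1_dist; simpl. rewrite (Rabs_minus_sym s), (Rabs_minus_sym t). auto. }
    lra. }
  assert (E2 := extension_spec v w s' t' Hv Hst' j q Hq1 Hq3).
  pose proof (metric_triangle_via d metric_d (extension v w s' t') (v q) (extension v w s t)). lra.
Qed.

Definition uniform_modulus (sg : R -> R -> X) (w : nat -> nat) : Prop :=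
  forall j p p', in_simplex2 p -> in_simplex2 p' -> l1_dist p p' < / (INR (w j) + 1) ->
    d (sg (fst p) (snd p)) (sg (fst p') (snd p')) <= (/2)^j.

Lemma extension_uniform_modulus sg w s t : uniform_modulus sg w -> in_simplex2 (s, t) ->
  extension (fun q => sg (fst (dyadic_pt q)) (snd (dyadic_pt q))) w s t = sg s t.
Proof.
  intros Hu Hp. set (v := fun q => sg (fst (dyadic_pt q)) (snd (dyadic_pt q))).
  assert (Hv : dyadic_modulus v w) by (intros j q q' H1 H2 H3; apply Hu; auto).
  symmetry. apply (extends_at_unique v w (s, t)); auto; [|apply extension_spec; auto].
  intros j q H1 H2. apply (Hu j (dyadic_pt q) (s, t)); auto.
  pose proof (mod_radius_half w j). pose proof (mod_radius_pos w j). lra.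
Qed.

Lemma extension_conv (vn : nat -> nat -> X) (wn : nat -> nat -> nat) v w s t :
  (forall n, dyadic_modulus (vn n) (wn n)) -> dyadic_modulus v w ->
  (forall j, exists N, forall n, (n >= N)%nat -> forall i, (i <= j)%nat -> wn n i = w i) ->
  (forall q eps, eps > 0 -> exists N, forall n, (n >= N)%nat -> d (vn n q) (v q) < eps) ->
  in_simplex2 (s, t) ->
  forall eps, eps > 0 -> exists N, forall n, (n >= N)%nat ->
    d (extension (vn n) (wn n) s t) (extension v w s t) < eps.
Proof.
  intros Hvn Hv Hw Hconv Hp eps He. pose proof metric_d as [_ [_ [Ms Mt]]].
  destruct (half_pow_small (eps/4)) as [j Hj]; [lra|].
  destruct (dyadic_pt_dense (s, t) (mod_radius w j) Hp (mod_radius_pos w j)) as [q [Hq1 Hq2]].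
  destruct (Hw j) as [N1 HN1].
  destruct (Hconv q (eps/2) ltac:(lra)) as [N2 HN2].
  exists (Nat.max N1 N2). intros n Hn.
  assert (Hr : mod_radius (wn n) j = mod_radius w j)
    by (apply mod_radius_ext; intros; apply HN1; auto; lia).
  assert (E1 := extension_spec (vn n) (wn n) s t (Hvn n) Hp j q Hq1 ltac:(rewrite Hr; auto)).
  assert (E2 := extension_spec v w s t Hv Hp j q Hq1 Hq2).
  specialize (HN2 n ltac:(lia)).
  pose proof (metric_triangle_via d metric_d (extension (vn n) (wn n) s t) (vn n q) (v q)).
  pose proof (Mt (extension (vn n) (wn n) s t) (v q) (extension v w s t)). lra.
Qed.

Lemma dyadic_modulus_limit (vn : nat -> nat -> X) (wn : nat -> nat -> nat) v w :
  (forall n, dyadic_modulus (vn n) (wn n)) ->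
  (forall j, exists N, forall n, (n >= N)%nat -> wn n j = w j) ->
  (forall q eps, eps > 0 -> exists N, forall n, (n >= N)%nat -> d (vn n q) (v q) < eps) ->
  dyadic_modulus v w.
Proof.
  intros Hvn Hw Hconv j q q' H1 H2 H3. pose proof metric_d as [_ [_ [_ Mt]]].
  apply Rle_plus_epsilon. intros eps He.
  destruct (Hw j) as [A HA].
  destruct (Hconv q (eps/2) ltac:(lra)) as [B HB], (Hconv q' (eps/2) ltac:(lra)) as [C HC].
  set (n := Nat.max A (Nat.max B C)).
  specialize (HB n ltac:(lia)). specialize (HC n ltac:(lia)).
  pose proof (Hvn n j q q' H1 H2 ltac:(rewrite HA by lia; exact H3)).
  pose proof (metric_triangle_via d metric_d (v q) (vn n q) (vn n q')).
  pose proof (Mt (v q) (vn n q') (v q')). lra.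
Qed.

End Extension.

Fixpoint sumZ (N : nat) (F : nat -> Z) : Z :=
  match N with O => 0%Z | S N' => (sumZ N' F + F N')%Z end.

Lemma sumZ_ext N F G : (forall l, (l < N)%nat -> F l = G l) -> sumZ N F = sumZ N G.
Proof. induction N; intro H; simpl; auto. rewrite IHN, H; auto. Qed.

Lemma sumZ_plus N F G : sumZ N (fun l => (F l + G l)%Z) = (sumZ N F + sumZ N G)%Z.
Proof. induction N; simpl; auto. rewrite IHN. lia. Qed.

Lemma sumZ_zero N F : (forall l, (l < N)%nat -> F l = 0%Z) -> sumZ N F = 0%Z.
Proof. induction N; intro H; simpl; auto. rewrite IHN, H; auto. Qed.

Lemma sumZ_nonneg N F : (forall l, (l < N)%nat -> (0 <= F l)%Z) -> (0 <= sumZ N F)%Z.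
Proof.
  induction N; intro H; simpl; [lia|].
  specialize (IHN (fun l h => H l ltac:(lia))). specialize (H N ltac:(lia)). lia.
Qed.

Lemma sumZ_ge1 N F l0 : (forall l, (l < N)%nat -> (0 <= F l)%Z) -> (l0 < N)%nat -> (1 <= F l0)%Z ->
  (1 <= sumZ N F)%Z.
Proof.
  induction N; intros H Hl Hf; [lia|]. simpl.
  destruct (Nat.eq_dec l0 N) as [->|h].
  - pose proof (sumZ_nonneg N F (fun l h => H l ltac:(lia))). lia.
  - specialize (IHN (fun l h => H l ltac:(lia)) ltac:(lia) Hf). specialize (H N ltac:(lia)). lia.
Qed.

Lemma sumZ_shift N F : sumZ (S N) F = (F 0%nat + sumZ N (fun l => F (S l)))%Z.
Proof. induction N; simpl in *; [lia|]. rewrite IHN. lia. Qed.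

(* If the classes of an equivalence relation [R] on [0..N) all have coefficient sum zero, so has
   every [R]-saturated set [J]; induction on the size of [J], removing one class at a time. *)
Lemma sumZ_saturated_zero N (c : nat -> Z) (R : nat -> nat -> Prop) :
  (forall l, R l l) -> (forall l l', R l l' -> R l' l) ->
  (forall l l' l'', R l l' -> R l' l'' -> R l l'') ->
  (forall l, (l < N)%nat -> sumZ N (fun l' => (c l' * indicator (R l l'))%Z) = 0%Z) ->
  forall J : nat -> Prop,
  (forall l l', (l < N)%nat -> (l' < N)%nat -> J l -> R l l' -> J l') ->
  sumZ N (fun l => (c l * indicator (J l))%Z) = 0%Z.
Proof.
  intros Rr Rs Rt Hclass.
  assert (Main : forall B J, (sumZ N (fun l => indicator (J l)) <= Z.of_nat B)%Z ->
    (forall l l', (l < N)%nat -> (l' < N)%nat -> J l -> R l l' -> J l') ->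
    sumZ N (fun l => (c l * indicator (J l))%Z) = 0%Z).
  { induction B; intros J HB HJ;
      (destruct (classic (exists l0, (l0 < N)%nat /\ J l0)) as [[l0 [Hl0 HJ0]]|Hno];
       [|apply sumZ_zero; intros l Hl; rewrite indicator_false; [lia|]; intro h; apply Hno; eauto]).
    - pose proof (sumZ_ge1 N (fun l => indicator (J l)) l0 (fun l _ => proj1 (indicator_bounds _))
        Hl0 ltac:(cbv beta; rewrite indicator_true; auto; lia)). lia.
    - set (J' := fun l => J l /\ ~ R l0 l).
      assert (Split : forall l, (l < N)%nat ->
          indicator (J l) = (indicator (J' l) + indicator (R l0 l))%Z).
      { intros l Hl. unfold J'. destruct (classic (R l0 l)) as [h|h].
        - rewrite (indicator_true (J l)) by (apply (HJ l0 l); auto).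
          rewrite (indicator_false (J l /\ ~ R l0 l)) by tauto. rewrite indicator_true; auto.
        - rewrite (indicator_false (R l0 l)) by auto.
          rewrite (indicator_iff (J l) (J l /\ ~ R l0 l)) by tauto. lia. }
      assert (HJ' : forall l l', (l < N)%nat -> (l' < N)%nat -> J' l -> R l l' -> J' l').
      { intros l l' Hl Hl' [h1 h2] h3. split; [apply (HJ l l'); auto|].
        intro h4. apply h2. apply (Rt l0 l' l); auto. }
      assert (C1 : (1 <= sumZ N (fun l => indicator (R l0 l)))%Z).
      { apply (sumZ_ge1 N _ l0); auto; [intros; apply indicator_bounds|].
        cbv beta. rewrite indicator_true; auto; lia. }
      assert (Cnt : sumZ N (fun l => indicator (J l)) =
          (sumZ N (fun l => indicator (J' l)) + sumZ N (fun l => indicator (R l0 l)))%Z)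
        by (rewrite <- sumZ_plus; apply sumZ_ext; auto).
      rewrite (sumZ_ext N _ (fun l => (c l * indicator (J' l) + c l * indicator (R l0 l))%Z)).
      + rewrite sumZ_plus, (IHB J' ltac:(rewrite Nat2Z.inj_succ in HB; lia) HJ'), Hclass; auto.
      + intros l Hl. rewrite Split; auto. lia. }
  intros J HJ. apply (Main (Z.to_nat (sumZ N (fun l => indicator (J l))))); auto.
  rewrite Z2Nat.id; [lia|]. apply sumZ_nonneg. intros; apply indicator_bounds.
Qed.

Lemma map_nth_seq {A : Type} (l : list A) (a : A) : l = map (fun i => nth i l a) (seq 0 (length l)).
Proof.
  induction l as [|b l IH]; simpl; auto. f_equal.
  rewrite <- seq_shift, map_map. exact IH.
Qed.

(** * Limits of null chains *)

Section ChainConvergence.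

Context {X : Type} (d : X -> X -> R) (x0 : X).
Hypothesis metric_d : is_metric d.

Definition default_term : Z * (R -> X) := (0%Z, fun _ => x0).

Lemma coeff_nth (L : chain1 X) p :
  coeff L p = sumZ (length L) (fun l => (fst (nth l L default_term)
    * indicator (same_simplex1 (snd (nth l L default_term)) p))%Z).
Proof.
  induction L as [|[k q] L IH]; [reflexivity|].
  cbn [coeff length]. rewrite sumZ_shift. cbn [nth fst snd]. rewrite IH. reflexivity.
Qed.

Definition pointwise_conv (gs : nat -> R -> X) (g : R -> X) : Prop :=
  forall u, unit_int u -> forall eps, eps > 0 ->
    exists M, forall n, (n >= M)%nat -> d (gs n u) (g u) < eps.

Definition pointwise_conv2 (ss : nat -> R -> R -> X) (s : R -> R -> X) : Prop :=
  forall a b, simplex2_pt a b -> forall eps, eps > 0 ->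
    exists M, forall n, (n >= M)%nat -> d (ss n a b) (s a b) < eps.

Definition chain_conv (Ls : nat -> chain1 X) (L : chain1 X) : Prop :=
  (forall n, map fst (Ls n) = map fst L) /\
  (forall l, (l < length L)%nat ->
     pointwise_conv (fun n => snd (nth l (Ls n) default_term)) (snd (nth l L default_term))).

Lemma pointwise_conv_const g : pointwise_conv (fun _ => g) g.
Proof. intros u _ eps He. exists 0%nat. intros. rewrite metric_dist_refl by auto. lra. Qed.

Lemma pointwise_conv_separate gs hs g h : pointwise_conv gs g -> pointwise_conv hs h ->
  ~ same_simplex1 g h -> exists M, forall n, (n >= M)%nat -> ~ same_simplex1 (gs n) (hs n).
Proof.
  intros Hg Hh Hgh. pose proof metric_d as [Mp [Me [Ms Mt]]].
  apply not_all_ex_not in Hgh. destruct Hgh as [u Hu].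
  apply imply_to_and in Hu. destruct Hu as [Hu Hne].
  assert (Hd : d (g u) (h u) > 0).
  { destruct (Mp (g u) (h u)) as [e|e]; auto. symmetry in e. apply Me in e. contradiction. }
  destruct (Hg u Hu (d (g u) (h u) / 3) ltac:(lra)) as [M1 HM1].
  destruct (Hh u Hu (d (g u) (h u) / 3) ltac:(lra)) as [M2 HM2].
  exists (Nat.max M1 M2). intros n Hn Hs.
  specialize (HM1 n ltac:(lia)). specialize (HM2 n ltac:(lia)). rewrite (Hs u Hu) in HM1.
  pose proof (metric_triangle_via d metric_d (g u) (hs n u) (h u)). lra.
Qed.

Lemma chain_conv_ext A B L : (forall n, A n = B n) -> chain_conv A L -> chain_conv B L.
Proof.
  intros H [H1 H2]. split.
  - intro n. rewrite <- H; auto.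
  - intros l Hl u Hu eps He. destruct (H2 l Hl u Hu eps He) as [M HM]. exists M.
    intros n Hn. rewrite <- H. auto.
Qed.

Lemma chain_conv_nil : chain_conv (fun _ => nil) nil.
Proof. split; auto. intros l Hl. simpl in Hl. lia. Qed.

Lemma chain_conv_cons (e : nat -> Z * (R -> X)) k g A L :
  (forall n, fst (e n) = k) -> pointwise_conv (fun n => snd (e n)) g -> chain_conv A L ->
  chain_conv (fun n => e n :: A n) ((k, g) :: L).
Proof.
  intros He Hg [H1 H2]. split.
  - intro n. simpl. rewrite He, H1. auto.
  - intros [|l] Hl; simpl; auto. apply H2. simpl in Hl. lia.
Qed.

Lemma chain_conv_neg A L : chain_conv A L -> chain_conv (fun n => neg_chain1 (A n)) (neg_chain1 L).
Proof.
  intros [H1 H2]. unfold neg_chain1.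
  assert (Efst : forall xs : chain1 X,
      map fst (map (fun e => ((- fst e)%Z, snd e)) xs) = map Z.opp (map fst xs))
    by (intro xs; rewrite !map_map; reflexivity).
  assert (Enth : forall l (xs : chain1 X),
      nth l (map (fun e : Z * (R -> X) => ((- fst e)%Z, snd e)) xs) default_term
      = ((- fst (nth l xs default_term))%Z, snd (nth l xs default_term)))
    by (intros l xs; exact (map_nth (fun e : Z * (R -> X) => ((- fst e)%Z, snd e)) xs default_term l)).
  split.
  - intro n. rewrite !Efst, H1. reflexivity.
  - intros l Hl. rewrite length_map in Hl.
    intros u Hu eps He. destruct (H2 l Hl u Hu eps He) as [M HM]. exists M. intros n Hn.
    rewrite !Enth. apply HM, Hn.
Qed.

Lemma chain_conv_bd2_map (gs : nat -> nat -> Z * (R -> R -> X)) g (idx : list nat) :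
  (forall n i, In i idx -> fst (gs n i) = fst (g i)) ->
  (forall i, In i idx -> pointwise_conv2 (fun n => snd (gs n i)) (snd (g i))) ->
  chain_conv (fun n => bd2 (map (gs n) idx)) (bd2 (map g idx)).
Proof.
  induction idx as [|i idx IH]; intros H1 H2; [apply chain_conv_nil|].
  cbn [map]. destruct (g i) as [k s] eqn:Eg.
  apply (chain_conv_ext (fun n => bd2 ((k, snd (gs n i)) :: map (gs n) idx))).
  { intro n. rewrite (surjective_pairing (gs n i)), H1, Eg by (left; auto). reflexivity. }
  rewrite bd2_cons. apply (chain_conv_ext (fun n => (k, face0 (snd (gs n i)))
    :: ((- k)%Z, face1 (snd (gs n i))) :: (k, face2 (snd (gs n i))) :: bd2 (map (gs n) idx)));
    [reflexivity|].
  pose proof (H2 i (or_introl eq_refl)) as Hi. rewrite Eg in Hi.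
  repeat apply chain_conv_cons; auto;
    try (intros u [Hu0 Hu1] eps He; apply Hi; unfold simplex2_pt; lra).
  apply IH; intros; [apply H1|apply H2]; right; auto.
Qed.

Lemma chain_conv_refines Ls L : chain_conv Ls L -> exists M, forall n, (n >= M)%nat ->
  forall l l', (l < length L)%nat -> (l' < length L)%nat ->
  same_simplex1 (snd (nth l (Ls n) default_term)) (snd (nth l' (Ls n) default_term)) ->
  same_simplex1 (snd (nth l L default_term)) (snd (nth l' L default_term)).
Proof.
  intros [_ H2]. set (N := length L).
  destruct (eventually_forall_le N (fun l n => forall l', (l' <= N)%nat -> (l < N)%nat -> (l' < N)%nat ->
      same_simplex1 (snd (nth l (Ls n) default_term)) (snd (nth l' (Ls n) default_term)) ->
      same_simplex1 (snd (nth l L default_term)) (snd (nth l' L default_term)))) as [M HM].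
  - intros l _.
    destruct (eventually_forall_le N (fun l' n => (l < N)%nat -> (l' < N)%nat ->
      same_simplex1 (snd (nth l (Ls n) default_term)) (snd (nth l' (Ls n) default_term)) ->
      same_simplex1 (snd (nth l L default_term)) (snd (nth l' L default_term)))) as [K HK].
    + intros l' _.
      destruct (classic ((l < N)%nat /\ (l' < N)%nat)) as [[hl hl']|hn];
        [|exists 0%nat; intros; tauto].
      destruct (classic (same_simplex1 (snd (nth l L default_term)) (snd (nth l' L default_term))))
        as [h|h]; [exists 0%nat; auto|].
      destruct (pointwise_conv_separate _ _ _ _ (H2 l hl) (H2 l' hl') h) as [M HM].
      exists M. intros n Hn _ _ Hs. exfalso. apply (HM n Hn Hs).
    + exists K. intros n Hn l' Hl'. apply HK; auto.
  - exists M. intros n Hn l l' Hl Hl'. apply (HM l ltac:(lia) n Hn l'); auto; lia.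
Qed.

(* For large [n], simplices that coincide in [Ls n] coincide in [L]; so the classes of equal
   simplices of [L] are unions of classes of [Ls n], and the coefficient sums of the latter vanish. *)
Lemma null_chain1_limit Ls L : chain_conv Ls L -> (forall n, null_chain1 (Ls n)) -> null_chain1 L.
Proof.
  intros HL Hnull. destruct (chain_conv_refines Ls L HL) as [M HM]. destruct HL as [H1 _].
  set (N := length L) in HM.
  assert (Hlen : length (Ls M) = N).
  { unfold N. rewrite <- (length_map fst (Ls M)), H1, length_map; auto. }
  assert (Hc : forall l, fst (nth l (Ls M) default_term) = fst (nth l L default_term)).
  { intro l. rewrite <- !(map_nth fst). rewrite H1. reflexivity. }
  set (P := fun l => snd (nth l L default_term)).
  set (PM := fun l => snd (nth l (Ls M) default_term)).
  set (c := fun l => fst (nth l L default_term)).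
  apply null_chain1_coeff. intro p. rewrite coeff_nth. fold N.
  change (sumZ N (fun l => (c l * indicator (same_simplex1 (P l) p))%Z) = 0%Z).
  apply (sumZ_saturated_zero N c (fun l l' => same_simplex1 (P l) (P l'))).
  - intro l. apply same_simplex1_refl.
  - intros l l'. apply same_simplex1_sym.
  - intros l l' l''. apply same_simplex1_trans.
  - intros l Hl.
    apply (sumZ_saturated_zero N c (fun l1 l2 => same_simplex1 (PM l1) (PM l2))).
    + intro; apply same_simplex1_refl.
    + intros l1 l2; apply same_simplex1_sym.
    + intros l1 l2 l3; apply same_simplex1_trans.
    + intros l1 Hl1. pose proof (proj1 (null_chain1_coeff (Ls M)) (Hnull M) (PM l1)) as E.
      rewrite coeff_nth, Hlen in E. rewrite <- E. apply sumZ_ext. intros l2 Hl2.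
      rewrite Hc. fold (c l2). f_equal. apply indicator_iff. split; apply same_simplex1_sym.
    + intros l1 l2 Hl1 Hl2 HT Hs. eapply same_simplex1_trans; [exact HT|].
      apply (HM M (le_n _) l1 l2 Hl1 Hl2 Hs).
  - intros l l' Hl Hl' HJ HT. eapply same_simplex1_trans; [apply same_simplex1_sym, HT|exact HJ].
Qed.

End ChainConvergence.

(** * Analyticity of the homology relation *)

(* A witness encodes a singular 2-chain through the Cantor pairing: the tag at [(0,0)] is the number
   of 2-simplices, the tags at [(1,i)] and [(2,i)] are the positive and negative parts of the
   coefficient of simplex [i], the tag at [(3,j)] is the modulus [w j], and the point at [(i,q)] is
   the value of simplex [i] at [dyadic_pt q]. *)
Definition wit_size {X : Type} (z : witness X) : nat := fst (z (Cantor.to_nat (0, 0)%nat)).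

Definition wit_coeff {X : Type} (z : witness X) (i : nat) : Z :=
  (Z.of_nat (fst (z (Cantor.to_nat (1, i)%nat))) - Z.of_nat (fst (z (Cantor.to_nat (2, i)%nat))))%Z.

Definition wit_modulus {X : Type} (z : witness X) (j : nat) : nat := fst (z (Cantor.to_nat (3, j)%nat)).

Definition wit_values {X : Type} (z : witness X) (i : nat) : nat -> X :=
  fun q => snd (z (Cantor.to_nat (i, q))).

Section Witness.

Context {X : Type} (d : X -> X -> R) (x : X) (f : nat -> R -> X).
Hypothesis metric_d : is_metric d.
Hypothesis complete_d : complete_metric d.

Definition wit_chain (z : witness X) : chain2 X :=
  map (fun i => (wit_coeff z i, extension d x (wit_values z i) (wit_modulus z))) (seq 0 (wit_size z)).

Definition wit_rel (a b : cantor) (z : witness X) : Prop :=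
  (forall i, (i < wit_size z)%nat -> dyadic_modulus d (wit_values z i) (wit_modulus z)) /\
  null_chain1 ((1%Z, concat f x a) :: ((-1)%Z, concat f x b) :: neg_chain1 (bd2 (wit_chain z))).

Lemma sim_rel_of_wit_rel a b z : wit_rel a b z -> sim_rel d f x a b.
Proof.
  intros [HV HN]. exists (wit_chain z). split; auto.
  intros e He. apply in_map_iff in He. destruct He as [i [<- Hi]].
  apply in_seq in Hi. apply extension_cont; auto. apply HV. lia.
Qed.

Lemma common_uniform_modulus (sg : nat -> R -> R -> X) K :
  (forall i, (i < K)%nat -> cont_on_simplex2 d (sg i)) ->
  exists w, forall i, (i < K)%nat -> uniform_modulus d (sg i) w.
Proof.
  intro Hcont.
  assert (Hw : forall j, exists N, forall i, (i <= K)%nat -> forall N', (N' >= N)%nat ->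
     (i < K)%nat -> forall p p', in_simplex2 p -> in_simplex2 p' -> l1_dist p p' < / (INR N' + 1) ->
       d (sg i (fst p) (snd p)) (sg i (fst p') (snd p')) <= (/2)^j).
  { intro j. apply eventually_forall_le. intros i _.
    destruct (Nat.lt_ge_cases i K) as [hi|hi]; [|exists 0%nat; intros; lia].
    destruct (simplex2_uniform_cont d (sg i) metric_d (Hcont i hi) ((/2)^j) (half_pow_pos j))
      as [del [Hdel Hh]].
    destruct (inv_succ_small del Hdel) as [N HNi]. exists N. intros N' HN' _ p p' Hp Hp' Hd.
    left. rewrite (proj1 (proj2 (proj2 metric_d))). apply Hh; auto. unfold l1_dist in Hd.
    rewrite (Rabs_minus_sym (fst p')), (Rabs_minus_sym (snd p')).
    pose proof (inv_succ_le N N' HN'). lra. }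
  destruct (choice _ Hw) as [w Hw'].
  exists w. intros i Hi j p p' Hp Hp' Hd. apply (Hw' j i ltac:(lia) (w j) (le_n _) Hi); auto.
Qed.

Definition chain_default : Z * (R -> R -> X) := (0%Z, fun _ _ => x).

Definition chain_witness (C : chain2 X) (w : nat -> nat) : witness X := fun n =>
  (match Cantor.of_nat n with
   | (0, _) => length C
   | (1, i) => Z.to_nat (fst (nth i C chain_default))
   | (2, i) => Z.to_nat (- fst (nth i C chain_default))
   | (3, j) => w j
   | _ => 0%nat
   end,
   let '(i, q) := Cantor.of_nat n in
   snd (nth i C chain_default) (fst (dyadic_pt q)) (snd (dyadic_pt q))).

Lemma wit_chain_chain_witness C w :
  wit_chain (chain_witness C w) = map (fun i => (fst (nth i C chain_default),
    extension d x (fun q => snd (nth i C chain_default) (fst (dyadic_pt q)) (snd (dyadic_pt q))) w))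
    (seq 0 (length C)).
Proof.
  unfold wit_chain, wit_size, wit_coeff, wit_values, wit_modulus, chain_witness.
  cbn [fst snd]. rewrite Cantor.cancel_of_to.
  apply map_ext. intro i. rewrite !Cantor.cancel_of_to. f_equal; [lia|].
  f_equal; apply functional_extensionality; intro q; rewrite Cantor.cancel_of_to; reflexivity.
Qed.

(* The witness of an actual homology samples each simplex at the dyadic points; since extension
   recovers the simplex on the 2-simplex, the boundaries of both chains agree on [0,1]. *)
Lemma wit_rel_of_sim_rel a b : sim_rel d f x a b -> exists z, wit_rel a b z.
Proof.
  intros [C [HC HN]].
  set (sg := fun i => snd (nth i C chain_default)).
  destruct (common_uniform_modulus sg (length C)) as [w Hw].
  { intros i Hi. apply (HC (nth i C chain_default)), nth_In, Hi. }
  exists (chain_witness C w). split.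
  - intros i Hi j q q' H1 H2 H3. unfold wit_values, wit_modulus, wit_size, chain_witness in *.
    cbn [fst snd] in *.
    rewrite !Cantor.cancel_of_to in *. apply Hw; auto.
  - apply (null_chain1_limit d x metric_d
      (fun _ => (1%Z, concat f x a) :: ((-1)%Z, concat f x b) :: neg_chain1 (bd2 C))); auto.
    apply (chain_conv_cons d x (fun _ => (1%Z, concat f x a))); auto;
      [apply pointwise_conv_const; auto|].
    apply (chain_conv_cons d x (fun _ => ((-1)%Z, concat f x b))); auto;
      [apply pointwise_conv_const; auto|].
    apply chain_conv_neg. rewrite wit_chain_chain_witness.
    apply (chain_conv_ext d x (fun _ => bd2 (map (fun i => nth i C chain_default) (seq 0 (length C))))).
    { intro n. rewrite <- map_nth_seq. reflexivity. }
    apply chain_conv_bd2_map; [reflexivity|].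
    intros i Hi s t Hst eps He. apply in_seq in Hi. exists 0%nat. intros n _. cbn [snd]. fold (sg i).
    rewrite (extension_uniform_modulus d x metric_d complete_d (sg i) w s t (Hw i ltac:(lia)) Hst).
    rewrite metric_dist_refl by auto. lra.
Qed.

Definition cantor_conv (an : nat -> cantor) (a : cantor) : Prop :=
  forall N, exists M, forall n, (n >= M)%nat -> forall i, (i < N)%nat -> an n i = a i.

Lemma concat_pointwise_conv (an : nat -> cantor) a :
  cantor_conv an a -> pointwise_conv d (fun n => concat f x (an n)) (concat f x a).
Proof.
  intros Ha u Hu eps He. destruct (Ha (S (blk u))) as [M HM]. exists M. intros n Hn.
  replace (concat f x (an n) u) with (concat f x a u); [rewrite metric_dist_refl; auto; lra|].
  unfold concat. destruct (Rlt_dec u 1); auto. rewrite HM; auto.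
Qed.

Lemma wit_rel_limit (an bn : nat -> cantor) (zn : nat -> witness X) a b z :
  cantor_conv an a -> cantor_conv bn b -> witness_conv d zn z ->
  (forall n, wit_size (zn n) = wit_size z) ->
  (forall n i, (i < wit_size z)%nat -> wit_coeff (zn n) i = wit_coeff z i) ->
  (forall n, wit_rel (an n) (bn n) (zn n)) -> wit_rel a b z.
Proof.
  intros Ha Hb Hz Hk Hc HD.
  pose proof (witness_conv_tag d metric_d zn z Hz) as Ctag.
  pose proof (witness_conv_point d metric_d zn z Hz) as Cpt.
  assert (Hw : forall j, exists N, forall n, (n >= N)%nat -> wit_modulus (zn n) j = wit_modulus z j)
    by (intro j; apply Ctag).
  assert (Hv : forall i q eps, eps > 0 ->
      exists N, forall n, (n >= N)%nat -> d (wit_values (zn n) i q) (wit_values z i q) < eps)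
    by (intros i q; apply Cpt).
  assert (HV : forall i, (i < wit_size z)%nat -> dyadic_modulus d (wit_values z i) (wit_modulus z)).
  { intros i Hi. apply (dyadic_modulus_limit d metric_d (fun n => wit_values (zn n) i)
      (fun n => wit_modulus (zn n))); auto.
    intro n. apply (HD n). rewrite Hk. exact Hi. }
  split; [exact HV|].
  apply (null_chain1_limit d x metric_d (fun n => (1%Z, concat f x (an n))
    :: ((-1)%Z, concat f x (bn n)) :: neg_chain1 (bd2 (wit_chain (zn n))))); [|intro n; apply HD].
  apply (chain_conv_cons d x (fun n => (1%Z, concat f x (an n)))); auto;
    [apply concat_pointwise_conv; auto|].
  apply (chain_conv_cons d x (fun n => ((-1)%Z, concat f x (bn n)))); auto;
    [apply concat_pointwise_conv; auto|].
  apply chain_conv_neg. unfold wit_chain.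
  apply (chain_conv_ext d x (fun n => bd2 (map (fun i => (wit_coeff (zn n) i,
    extension d x (wit_values (zn n) i) (wit_modulus (zn n)))) (seq 0 (wit_size z)))));
    [intro n; rewrite Hk; reflexivity|].
  apply chain_conv_bd2_map; intros; apply in_seq in H; [apply Hc; lia|].
  intros s t Hst. apply (extension_conv d x metric_d complete_d); auto.
  - intro n. apply HD. rewrite Hk. lia.
  - apply HV. lia.
  - intro j. destruct (eventually_forall_le j (fun i n => wit_modulus (zn n) i = wit_modulus z i))
      as [N HN]; [intros; apply Hw|].
    exists N. intros n Hn i' Hi'. apply HN; auto.
Qed.

Lemma wit_rel_seq_closed (an bn : nat -> cantor) (zn : nat -> witness X) a b z :
  cantor_conv an a -> cantor_conv bn b -> witness_conv d zn z ->
  (forall n, wit_rel (an n) (bn n) (zn n)) -> wit_rel a b z.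
Proof.
  intros Ha Hb Hz HD.
  pose proof (witness_conv_tag d metric_d zn z Hz) as Ctag.
  destruct (Ctag (Cantor.to_nat (0, 0)%nat)) as [M0 HM0].
  destruct (eventually_forall_le (wit_size z)
    (fun i n => (i < wit_size z)%nat -> wit_coeff (zn n) i = wit_coeff z i)) as [M1 HM1].
  { intros i _. destruct (Ctag (Cantor.to_nat (1, i)%nat)) as [A HA].
    destruct (Ctag (Cantor.to_nat (2, i)%nat)) as [B HB].
    exists (Nat.max A B). intros n Hn _. unfold wit_coeff. rewrite HA, HB by lia. reflexivity. }
  set (M := Nat.max M0 M1).
  apply (wit_rel_limit (fun n => an (n + M)%nat) (fun n => bn (n + M)%nat) (fun n => zn (n + M)%nat)).
  - intro N. destruct (Ha N) as [A HA]. exists A. intros n Hn. apply HA. lia.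
  - intro N. destruct (Hb N) as [A HA]. exists A. intros n Hn. apply HA. lia.
  - intros eps He. destruct (Hz eps He) as [A HA]. exists A. intros n Hn. apply HA. lia.
  - intro n. apply HM0. lia.
  - intros n i Hi. apply HM1; auto; lia.
  - intro n. apply HD.
Qed.

End Witness.

Lemma closed_in_CCZ_of_seq_closed {Z : Type} (dZ : Z -> Z -> R) (D : cantor -> cantor -> Z -> Prop) :
  is_metric dZ ->
  (forall (an bn : nat -> cantor) (zn : nat -> Z) a b z,
    (forall N, exists M, forall n, (n >= M)%nat -> forall i, (i < N)%nat ->
       an n i = a i /\ bn n i = b i) ->
    (forall eps, eps > 0 -> exists M, forall n, (n >= M)%nat -> dZ (zn n) z < eps) ->
    (forall n, D (an n) (bn n) (zn n)) -> D a b z) ->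
  closed_in_CCZ dZ D.
Proof.
  intros [_ [_ [Ms _]]] HS a b z HnD. apply NNPP. intro Hno.
  assert (Hn : forall n : nat, exists t : cantor * cantor * Z,
    (forall i, (i < n)%nat -> fst (fst t) i = a i /\ snd (fst t) i = b i) /\
    dZ z (snd t) < / (INR n + 1) /\ D (fst (fst t)) (snd (fst t)) (snd t)).
  { intro n. apply NNPP. intro H. apply Hno. exists n, (/ (INR n + 1)).
    split; [apply inv_succ_pos|].
    intros a' b' z' H1 H2 H3. apply H. exists (a', b', z'). simpl. auto. }
  destruct (choice _ Hn) as [T HT].
  apply HnD, (HS (fun n => fst (fst (T n))) (fun n => snd (fst (T n))) (fun n => snd (T n))).
  - intro N. exists N. intros n Hn' i Hi. apply (proj1 (HT n)). lia.
  - intros eps He. destruct (inv_succ_small eps He) as [k Hk]. exists k. intros n Hn'.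
    rewrite Ms. pose proof (proj1 (proj2 (HT n))). pose proof (inv_succ_le k n Hn'). lra.
  - intro n. apply HT.
Qed.

Theorem lemma2p3 (X : Type) (d : X -> X -> R) (x : X) (f : nat -> R -> X) :
  peano_continuum d ->
  (forall n, is_loop d (f n) x) ->
  (forall n s t, unit_int s -> unit_int t -> d (f n s) (f n t) <= (/ 2) ^ n) ->
  (forall n, ~ nulhomologous d (f n)) ->
  analytic_CC (sim_rel d f x) /\ equivalence_rel (sim_rel d f x) /\
  (forall a b : cantor, differ_exactly_once a b -> ~ sim_rel d f x a b).
Proof.
  intros [Hm [Hcomp _]] Hl Hdiam Hnul.
  assert (Hc : complete_metric d) by (apply compact_space_complete; auto).
  split; [|split].
  - exists (witness X), (witness_dist d), (wit_rel d x f).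
    split; [apply witness_dist_polish; auto|split].
    + apply closed_in_CCZ_of_seq_closed; [apply witness_dist_polish; auto|].
      intros an bn zn a b z Hab Hz HD. apply (wit_rel_seq_closed d x f Hm Hc an bn zn); auto;
        intro N; destruct (Hab N) as [M HM]; exists M; intros; apply HM; auto.
    + intros a b. split; [apply wit_rel_of_sim_rel; auto|].
      intros [z Hz]. apply (sim_rel_of_wit_rel d x f Hm Hc a b z Hz).
  - apply sim_rel_equivalence.
  - apply single_diff_not_sim; auto.
Qed.
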